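(* Let $I$, ${\cal X}_I$, ${\cal Q}_I$, $T_I$ and $\phi_\sigma$ be as in the context. If $\sigma$ is a satisfying assignment for $I$, then ${\cal T}_\sigma=(T_I,\phi_\sigma)$ is a ternary phylogenetic ${\cal X}_I$-tree that displays ${\cal Q}_I$ and is distinguished by ${\cal Q}_I$.
   Context: Instance: $I$ has variables $v_1,\ldots,v_n$, each occurring in at least one clause, and clauses ${\cal C}_1,\ldots,{\cal C}_m$; each clause is an ordered triple of literals written ${\cal C}_j=X\vee Y\vee Z$, and no variable occurs more than once in a clause. Literals are $v_i$ or $\overline{v_i}$, $\overline W$ is the negation of literal $W$. A truth assignment $\sigma$ extends to literals by $\sigma(\overline{v_i})=1-\sigma(v_i)$; it is satisfying if each clause has exactly one literal of value 1. $\Delta_i$ is the set of $j$ such that $v_i$ or $\overline{v_i}$ occurs in ${\cal C}_j$. Ground set ${\cal X}_I$: $\alpha_{v_i},\alpha_{\overline{v_i}}$ ($1\le i\le n$); $\beta^j_{v_i},\beta^j_{\overline{v_i}}$ ($j\in\Delta_i$); $\gamma^j_1,\gamma^j_2,\gamma^j_3,\lambda^j$ ($1\le j\le m$); $\delta,\mu$. Sets: $B=\{\mu,\delta\}$, $H_{v_i}=\{\alpha_{v_i},\delta\}$, $H_{\overline{v_i}}=\{\alpha_{\overline{v_i}},\delta\}$, $A_i=\{\alpha_{v_i},\alpha_{\overline{v_i}}\}$, $S^j_{v_i}=\{\alpha_{v_i},\beta^j_{v_i}\}$, $S^j_{\overline{v_i}}=\{\alpha_{\overline{v_i}},\beta^j_{\overline{v_i}}\}$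 ($j\in\Delta_i$); for ${\cal C}_j=X\vee Y\vee Z$: $K^j_{\overline X}=\{\beta^j_X,\gamma^j_1\}$, $K^j_{\overline Y}=\{\beta^j_Y,\gamma^j_2\}$, $K^j_{\overline Z}=\{\beta^j_Z,\gamma^j_3\}$, $K^j_X=\{\beta^j_{\overline X},\lambda^j\}$, $K^j_Y=\{\beta^j_{\overline Y},\lambda^j\}$, $K^j_Z=\{\beta^j_{\overline Z},\lambda^j\}$, $L^j_X=\{\beta^j_{\overline X},\gamma^j_2\}$, $L^j_Y=\{\beta^j_{\overline Y},\gamma^j_3\}$, $L^j_Z=\{\beta^j_{\overline Z},\gamma^j_1\}$, $D^j_p=\{\gamma^j_p,\lambda^j\}$, $F^j=\{\lambda^j,\mu\}$ (objects indexed by a literal $W$ mean the one for that literal). ${\cal Q}_I$ (quartet trees = partial splits $P|P'$ of two disjoint 2-sets) consists of: $A_i|B$; $D^j_p|B$ ($p=1,2,3$); $S^j_{v_i}|S^{j'}_{\overline{v_i}}$ ($j,j'\in\Delta_i$); $S^j_{v_i}|K^{j'}_{\overline{v_i}}$, $S^j_{\overline{v_i}}|K^{j'}_{v_i}$ ($j<j'$ in $\Delta_i$); $K^j_{\overline{v_i}}|F^{j'}$, $K^j_{v_i}|F^{j'}$ ($j\in\Delta_i$, $j<j'\le m$); $H_{v_{i'}}|S^j_{v_i}$, $H_{\overline{v_{i'}}}|S^j_{v_i}$, $H_{v_{i'}}|S^j_{\overline{v_i}}$, $H_{\overline{v_{i'}}}|S^j_{\overline{v_i}}$ ($1\le i'<i\le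 n$, $j\in\Delta_i$); $H_{\overline{v_i}}|F^j$, $H_{v_i}|F^j$ (all $i,j$); for each ${\cal C}_j=X\vee Y\vee Z$: $K^j_{\overline X}|K^j_X$, $K^j_{\overline Y}|K^j_Y$, $K^j_{\overline Z}|K^j_Z$, $K^j_{\overline X}|L^j_X$, $K^j_{\overline Y}|L^j_Y$, $K^j_{\overline Z}|L^j_Z$, $S^j_Y|K^j_X$, $S^j_Z|K^j_Y$, $S^j_X|K^j_Z$, $S^j_Z|L^j_X$, $S^j_X|L^j_Y$, $S^j_Y|L^j_Z$. Tree $T_I$: vertices $y_0,\ldots,y_n$, $y'_1,\ldots,y'_n$, $a_i,a'_i$ ($1\le i\le n$), $u_0,\ldots,u_m$, and for each $j$: $x^j_1,\ldots,x^j_6,b^j_1,b^j_2,b^j_3,g^j_1,g^j_2,g^j_3,\ell^j$, and $c^j_i,z^j_i$ for each $i$ and $j\in\Delta_i$. Edges: $y_iy'_i$, $a_iy'_i$ ($1\le i\le n$); $c^j_iz^j_i$ ($j\in\Delta_i$); $y_0y_1,y_1y_2,\ldots,y_{n-1}y_n$; $y_nu_1,u_1u_2,\ldots,u_{m-1}u_m,u_mu_0$; for each $j$: $u_jx^j_1$, $x^j_1x^j_2$, $x^j_2x^j_3$, $x^j_2x^j_4$, $x^j_4x^j_5$, $x^j_4x^j_6$, $b^j_1x^j_6$, $b^j_2x^j_3$, $b^j_3x^j_5$, $g^j_1x^j_6$, $g^j_2x^j_1$, $g^j_3x^j_3$, $\ell^jx^j_5$; for each $i$ with $\Delta_i=\{j_1<\cdots<j_t\}$: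 $a'_iz^{j_1}_i, z^{j_1}_iz^{j_2}_i,\ldots,z^{j_{t-1}}_iz^{j_t}_i, z^{j_t}_iy'_i$. Map $\phi_\sigma:{\cal X}_I\to V(T_I)$: for each $i$, if $\sigma(v_i)=1$ then $\alpha_{v_i}\mapsto a_i$, $\alpha_{\overline{v_i}}\mapsto a'_i$, $\beta^j_{\overline{v_i}}\mapsto c^j_i$ for $j\in\Delta_i$; if $\sigma(v_i)=0$ then $\alpha_{\overline{v_i}}\mapsto a_i$, $\alpha_{v_i}\mapsto a'_i$, $\beta^j_{v_i}\mapsto c^j_i$ for $j\in\Delta_i$. For each ${\cal C}_j=X\vee Y\vee Z$: if $\sigma(X)=1$: $\beta^j_X\mapsto b^j_1$, $\beta^j_{\overline Y}\mapsto b^j_2$, $\beta^j_{\overline Z}\mapsto b^j_3$, $\gamma^j_1\mapsto g^j_1$, $\gamma^j_2\mapsto g^j_2$, $\gamma^j_3\mapsto g^j_3$; if $\sigma(Y)=1$: $\beta^j_Y\mapsto b^j_1$, $\beta^j_{\overline Z}\mapsto b^j_2$, $\beta^j_{\overline X}\mapsto b^j_3$, $\gamma^j_2\mapsto g^j_1$, $\gamma^j_3\mapsto g^j_2$, $\gamma^j_1\mapsto g^j_3$; if $\sigma(Z)=1$: $\beta^j_Z\mapsto b^j_1$, $\beta^j_{\overline X}\mapsto b^j_2$, $\beta^j_{\overline Y}\mapsto b^j_3$, $\gamma^j_3\mapsto g^j_1$, $\gamma^j_1\mapsto g^j_2$, $\gamma^j_2\mapsto g^j_3$; in all cases $\lambda^j\mapsto\ell^j$.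 Finally $\delta\mapsto y_0$, $\mu\mapsto u_0$. An $X$-tree is $(T,\phi)$, $T$ a tree, $\phi:X\to V(T)$ with $\phi^{-1}(v)\ne\emptyset$ for vertices of degree $\le2$; ternary if internal vertices have degree 3; phylogenetic if $\phi$ is a bijection onto the leaves. $(T,\phi)$ displays a partial split $P|P'$ if there is an edge set $F$ with $\phi(P)$, $\phi(P')$ in different components of $T-F$; an edge $e$ is distinguished by $P|P'$ if every such $F$ contains $e$. The tree displays ${\cal Q}_I$ if it displays every member, and is distinguished by ${\cal Q}_I$ if every internal edge (not incident with a leaf) is distinguished by some member. *)

(* Concrete encoding of the reduction from positive/general
   1-in-3-SAT instances to quartet compatibility (ground set X_I, quartet set
   Q_I, tree T_I, map phi_sigma), with 1-based indices as in the paper. *)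
From Stdlib Require Import Arith List Relations Bool.
Import ListNotations.

(* A graph is a vertex predicate Vs and a symmetric adjacency adj.      *)

Fixpoint chain {V : Type} (R : V -> V -> Prop) (l : list V) : Prop :=
  match l with
  | x :: ((y :: _) as r) => R x y /\ chain R r
  | _ => True
  end.

Definition has_cycle {V : Type} (adj : V -> V -> Prop) : Prop :=
  exists (x : V) (r : list V),
    NoDup (x :: r) /\ 2 <= length r /\ chain adj (x :: r) /\ adj (last r x) x.

Definition is_tree {V : Type} (Vs : V -> Prop) (adj : V -> V -> Prop) : Prop :=
  (exists l : list V, forall v, Vs v <-> In v l) /\
  (exists v, Vs v) /\
  (forall u v, adj u v -> Vs u /\ Vs v) /\
  (forall u v, adj u v -> adj v u) /\
  (forall u, ~ adj u u) /\
  (forall u v, Vs u -> Vs v -> clos_refl_trans V adj u v) /\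
  ~ has_cycle adj.

Definition degree {V : Type} (adj : V -> V -> Prop) (v : V) (k : nat) : Prop :=
  exists l : list V, NoDup l /\ (forall w, In w l <-> adj v w) /\ length l = k.

Definition is_leaf {V : Type} (Vs : V -> Prop) (adj : V -> V -> Prop) (v : V) : Prop :=
  Vs v /\ degree adj v 1.

Definition is_internal {V : Type} (Vs : V -> Prop) (adj : V -> V -> Prop) (v : V) : Prop :=
  Vs v /\ ~ is_leaf Vs adj v.

Definition is_X_tree {V X : Type} (Vs : V -> Prop) (adj : V -> V -> Prop)
  (Xs : X -> Prop) (phi : X -> V) : Prop :=
  is_tree Vs adj /\
  (forall x, Xs x -> Vs (phi x)) /\
  (forall v k, Vs v -> degree adj v k -> k <= 2 -> exists x, Xs x /\ phi x = v).

Definition is_ternary {V : Type} (Vs : V -> Prop) (adj : V -> V -> Prop) : Prop :=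
  forall v, is_internal Vs adj v -> degree adj v 3.

Definition is_phylogenetic {V X : Type} (Vs : V -> Prop) (adj : V -> V -> Prop)
  (Xs : X -> Prop) (phi : X -> V) : Prop :=
  (forall x, Xs x -> is_leaf Vs adj (phi x)) /\
  (forall x y, Xs x -> Xs y -> phi x = phi y -> x = y) /\
  (forall v, is_leaf Vs adj v -> exists x, Xs x /\ phi x = v).

(* a quartet tree / partial split P|P' with P = {a,b}, P' = {c,d} *)
Definition quartet (X : Type) : Type := ((X * X) * (X * X))%type.

(* T - F, for an edge set F (given as a relation; edge uv is removed iff
   F u v or F v u) *)
Definition adj_minus {V : Type} (adj : V -> V -> Prop) (F : V -> V -> Prop)
  (u v : V) : Prop := adj u v /\ ~ F u v /\ ~ F v u.

Definition edge_set {V : Type} (adj : V -> V -> Prop) (F : V -> V -> Prop) : Prop :=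
  forall u v, F u v -> adj u v.

Definition separates {V X : Type} (adj : V -> V -> Prop) (phi : X -> V)
  (F : V -> V -> Prop) (q : quartet X) : Prop :=
  let '((a, b), (c, d)) := q in
  let conn := clos_refl_trans V (adj_minus adj F) in
  conn (phi a) (phi b) /\ conn (phi c) (phi d) /\ ~ conn (phi a) (phi c).

Definition displays {V X : Type} (adj : V -> V -> Prop) (phi : X -> V)
  (q : quartet X) : Prop :=
  exists F, edge_set adj F /\ separates adj phi F q.

Definition distinguishes {V X : Type} (adj : V -> V -> Prop) (phi : X -> V)
  (q : quartet X) (u v : V) : Prop :=
  adj u v /\
  forall F, edge_set adj F -> separates adj phi F q -> F u v \/ F v u.

Definition displays_set {V X : Type} (adj : V -> V -> Prop) (phi : X -> V)
  (Q : quartet X -> Prop) : Prop :=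
  forall q, Q q -> displays adj phi q.

Definition distinguished_by {V X : Type} (Vs : V -> Prop) (adj : V -> V -> Prop)
  (phi : X -> V) (Q : quartet X -> Prop) : Prop :=
  forall u v, adj u v -> ~ is_leaf Vs adj u -> ~ is_leaf Vs adj v ->
    exists q, Q q /\ distinguishes adj phi q u v.

(* literal (i, true) = v_i, (i, false) = negation of v_i *)
Definition lit : Type := (nat * bool)%type.
Definition negl (l : lit) : lit := (fst l, negb (snd l)).
Definition lit_eqb (l l' : lit) : bool :=
  Nat.eqb (fst l) (fst l') && Bool.eqb (snd l) (snd l').
Definition vpos (i : nat) : lit := (i, true).
Definition vneg (i : nat) : lit := (i, false).

Definition lval (sigma : nat -> bool) (l : lit) : bool :=
  if snd l then sigma (fst l) else negb (sigma (fst l)).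

(* An instance: variables 1..n, clauses 1..m; clause j is the ordered triple
   cl j 1 \/ cl j 2 \/ cl j 3. *)
Definition wf_instance (n m : nat) (cl : nat -> nat -> lit) : Prop :=
  (forall j p, 1 <= j <= m -> 1 <= p <= 3 -> 1 <= fst (cl j p) <= n) /\
  (forall j p q, 1 <= j <= m -> 1 <= p <= 3 -> 1 <= q <= 3 ->
     fst (cl j p) = fst (cl j q) -> p = q) /\
  (forall i, 1 <= i <= n -> exists j p, 1 <= j <= m /\ 1 <= p <= 3 /\ fst (cl j p) = i).

Definition satisfying (m : nat) (cl : nat -> nat -> lit) (sigma : nat -> bool) : Prop :=
  forall j, 1 <= j <= m ->
    exists p, 1 <= p <= 3 /\ lval sigma (cl j p) = true /\
      forall q, 1 <= q <= 3 -> lval sigma (cl j q) = true -> q = p.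

Definition in_delta (m : nat) (cl : nat -> nat -> lit) (i j : nat) : Prop :=
  1 <= j <= m /\ exists p, 1 <= p <= 3 /\ fst (cl j p) = i.

Definition pos (cl : nat -> nat -> lit) (j i : nat) : nat :=
  if Nat.eqb (fst (cl j 1)) i then 1 else if Nat.eqb (fst (cl j 2)) i then 2 else 3.

Inductive taxon : Type :=
| TAlpha (l : lit)
| TBeta (j : nat) (l : lit)
| TGamma (j p : nat)
| TLambda (j : nat)
| TDelta
| TMu.

Definition XI (n m : nat) (cl : nat -> nat -> lit) (x : taxon) : Prop :=
  match x with
  | TAlpha l => 1 <= fst l <= n
  | TBeta j l => 1 <= fst l <= n /\ in_delta m cl (fst l) j
  | TGamma j p => 1 <= j <= m /\ 1 <= p <= 3
  | TLambda j => 1 <= j <= m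
  | TDelta => True
  | TMu => True
  end.

Definition Bs : taxon * taxon := (TMu, TDelta).
Definition Hs (l : lit) : taxon * taxon := (TAlpha l, TDelta).
Definition As (i : nat) : taxon * taxon := (TAlpha (vpos i), TAlpha (vneg i)).
Definition Ss (j : nat) (l : lit) : taxon * taxon := (TAlpha l, TBeta j l).
(* K^j_W for a literal W whose variable occurs in clause j:
   K^j_{neg(C_j,p)} = {beta^j_{C_j,p}, gamma^j_p},
   K^j_{C_j,p}      = {beta^j_{neg(C_j,p)}, lambda^j} *)
Definition Ks (cl : nat -> nat -> lit) (j : nat) (W : lit) : taxon * taxon :=
  let p := pos cl j (fst W) in
  (TBeta j (negl W), if lit_eqb W (cl j p) then TLambda j else TGamma j p).
(* L^j_X = {beta_negX, gamma_2}, L^j_Y = {beta_negY, gamma_3},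
   L^j_Z = {beta_negZ, gamma_1} *)
Definition next3 (p : nat) : nat := match p with 1 => 2 | 2 => 3 | _ => 1 end.
Definition Ls (cl : nat -> nat -> lit) (j p : nat) : taxon * taxon :=
  (TBeta j (negl (cl j p)), TGamma j (next3 p)).
Definition Ds (j p : nat) : taxon * taxon := (TGamma j p, TLambda j).
Definition Fs (j : nat) : taxon * taxon := (TLambda j, TMu).

Definition QI (n m : nat) (cl : nat -> nat -> lit) (q : quartet taxon) : Prop :=
  (exists i, 1 <= i <= n /\ q = (As i, Bs)) \/
  (exists j p, 1 <= j <= m /\ 1 <= p <= 3 /\ q = (Ds j p, Bs)) \/
  (exists i j j', 1 <= i <= n /\ in_delta m cl i j /\ in_delta m cl i j' /\
     q = (Ss j (vpos i), Ss j' (vneg i))) \/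
  (exists i j j', 1 <= i <= n /\ in_delta m cl i j /\ in_delta m cl i j' /\ j < j' /\
     (q = (Ss j (vpos i), Ks cl j' (vneg i)) \/ q = (Ss j (vneg i), Ks cl j' (vpos i)))) \/
  (exists i j j', 1 <= i <= n /\ in_delta m cl i j /\ j < j' <= m /\
     (q = (Ks cl j (vneg i), Fs j') \/ q = (Ks cl j (vpos i), Fs j'))) \/
  (exists i' i j, 1 <= i' /\ i' < i <= n /\ in_delta m cl i j /\
     (q = (Hs (vpos i'), Ss j (vpos i)) \/ q = (Hs (vneg i'), Ss j (vpos i)) \/
      q = (Hs (vpos i'), Ss j (vneg i)) \/ q = (Hs (vneg i'), Ss j (vneg i)))) \/
  (exists i j, 1 <= i <= n /\ 1 <= j <= m /\
     (q = (Hs (vneg i), Fs j) \/ q = (Hs (vpos i), Fs j))) \/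
  (exists j, 1 <= j <= m /\
     let X := cl j 1 in let Y := cl j 2 in let Z := cl j 3 in
     (q = (Ks cl j (negl X), Ks cl j X) \/ q = (Ks cl j (negl Y), Ks cl j Y) \/
      q = (Ks cl j (negl Z), Ks cl j Z) \/
      q = (Ks cl j (negl X), Ls cl j 1) \/ q = (Ks cl j (negl Y), Ls cl j 2) \/
      q = (Ks cl j (negl Z), Ls cl j 3) \/
      q = (Ss j Y, Ks cl j X) \/ q = (Ss j Z, Ks cl j Y) \/ q = (Ss j X, Ks cl j Z) \/
      q = (Ss j Z, Ls cl j 1) \/ q = (Ss j X, Ls cl j 2) \/ q = (Ss j Y, Ls cl j 3))).

Inductive vert : Type :=
| VY (k : nat)
| VY' (i : nat)
| VA (i : nat)
| VA' (i : nat)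
| VU (k : nat)
| VX (j k : nat)
| VB (j p : nat)
| VG (j p : nat)
| VL (j : nat)
| VC (i j : nat)
| VZ (i j : nat).

Definition TI_verts (n m : nat) (cl : nat -> nat -> lit) (v : vert) : Prop :=
  match v with
  | VY k => k <= n
  | VY' i | VA i | VA' i => 1 <= i <= n
  | VU k => k <= m
  | VX j k => 1 <= j <= m /\ 1 <= k <= 6
  | VB j p | VG j p => 1 <= j <= m /\ 1 <= p <= 3
  | VL j => 1 <= j <= m
  | VC i j | VZ i j => 1 <= i <= n /\ in_delta m cl i j
  end.

Definition delta_first (m : nat) (cl : nat -> nat -> lit) (i j : nat) : Prop :=
  in_delta m cl i j /\ forall j', in_delta m cl i j' -> j <= j'.
Definition delta_last (m : nat) (cl : nat -> nat -> lit) (i j : nat) : Prop :=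
  in_delta m cl i j /\ forall j', in_delta m cl i j' -> j' <= j.
Definition delta_succ (m : nat) (cl : nat -> nat -> lit) (i j j' : nat) : Prop :=
  in_delta m cl i j /\ in_delta m cl i j' /\ j < j' /\
  forall j'', in_delta m cl i j'' -> j < j'' -> j' <= j''.

Definition TI_edge (n m : nat) (cl : nat -> nat -> lit) (u v : vert) : Prop :=
  (exists i, 1 <= i <= n /\ u = VY i /\ v = VY' i) \/
  (exists i, 1 <= i <= n /\ u = VA i /\ v = VY' i) \/
  (exists i j, 1 <= i <= n /\ in_delta m cl i j /\ u = VC i j /\ v = VZ i j) \/
  (exists k, k < n /\ u = VY k /\ v = VY (S k)) \/
  (u = VY n /\ v = VU 1) \/
  (exists k, 1 <= k /\ k < m /\ u = VU k /\ v = VU (S k)) \/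
  (u = VU m /\ v = VU 0) \/
  (exists j, 1 <= j <= m /\
     ((u = VU j /\ v = VX j 1) \/ (u = VX j 1 /\ v = VX j 2) \/
      (u = VX j 2 /\ v = VX j 3) \/ (u = VX j 2 /\ v = VX j 4) \/
      (u = VX j 4 /\ v = VX j 5) \/ (u = VX j 4 /\ v = VX j 6) \/
      (u = VB j 1 /\ v = VX j 6) \/ (u = VB j 2 /\ v = VX j 3) \/
      (u = VB j 3 /\ v = VX j 5) \/ (u = VG j 1 /\ v = VX j 6) \/
      (u = VG j 2 /\ v = VX j 1) \/ (u = VG j 3 /\ v = VX j 3) \/
      (u = VL j /\ v = VX j 5))) \/
  (exists i j, 1 <= i <= n /\ delta_first m cl i j /\ u = VA' i /\ v = VZ i j) \/
  (exists i j j', 1 <= i <= n /\ delta_succ m cl i j j' /\ u = VZ i j /\ v = VZ i j') \/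
  (exists i j, 1 <= i <= n /\ delta_last m cl i j /\ u = VZ i j /\ v = VY' i).

Definition TI_adj (n m : nat) (cl : nat -> nat -> lit) (u v : vert) : Prop :=
  TI_edge n m cl u v \/ TI_edge n m cl v u.

Definition tpos (cl : nat -> nat -> lit) (sigma : nat -> bool) (j : nat) : nat :=
  if lval sigma (cl j 1) then 1 else if lval sigma (cl j 2) then 2 else 3.

(* rot t p: index of b/g vertex receiving the object of position p when the
   true literal is at position t:
   t = 1 (sigma(X)=1): 1->1, 2->2, 3->3;
   t = 2 (sigma(Y)=1): 2->1, 3->2, 1->3;
   t = 3 (sigma(Z)=1): 3->1, 1->2, 2->3. *)
Definition rot (t p : nat) : nat :=
  match t, p with
  | 1, _ => p
  | 2, 1 => 3
  | 2, 2 => 1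
  | 2, _ => 2
  | _, 1 => 2
  | _, 2 => 3
  | _, _ => 1
  end.

Definition phi_sigma (cl : nat -> nat -> lit) (sigma : nat -> bool) (x : taxon) : vert :=
  match x with
  | TAlpha l => if lval sigma l then VA (fst l) else VA' (fst l)
  | TBeta j l =>
      if lval sigma l then VB j (rot (tpos cl sigma j) (pos cl j (fst l)))
      else VC (fst l) j
  | TGamma j p => VG j (rot (tpos cl sigma j) p)
  | TLambda j => VL j
  | TDelta => VY 0
  | TMu => VU 0
  end.

From Stdlib Require Import Arith Lia List Bool Relations Classical_Prop.
Import ListNotations.

(* Root T_I at y_0, so that every vertex but y_0 has a parent. For an edge
   set F, two vertices lie in the same component of T_I - F exactly when every
   removed edge (w, parent w) has both or neither of them below w. Hence a
   quartet ab|cd is displayed as soon as some vertex p has {a, b} and {c, d} on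
   different sides of the edge above p, and that edge is distinguished by ab|cd
   when it is the only edge with this property. Each quartet of Q_I and each
   internal edge of T_I is then checked against an explicit witness; the
   satisfying assignment enters through the position of the true literal of
   each clause, which fixes how phi_sigma labels the clause gadget. *)

Lemma degree_unique {V : Type} (adj : V -> V -> Prop) v k k' :
  degree adj v k -> degree adj v k' -> k = k'.
Proof.
  intros [l [Nl [Sl <-]]] [l' [Nl' [Sl' <-]]].
  apply Nat.le_antisymm; apply NoDup_incl_length; auto;
    intros x Hx; [apply Sl', Sl | apply Sl, Sl']; exact Hx.
Qed.

Lemma chain_nth {V : Type} (R : V -> V -> Prop) l d :
  chain R l -> forall k, S k < length l -> R (nth k l d) (nth (S k) l d).
Proof.
  induction l as [|a l IH]; simpl; intros H k Hk; [lia|].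
  destruct l as [|b l]; simpl in *; [lia|].
  destruct H as [H1 H2]. destruct k; auto. apply (IH H2 k). simpl; lia.
Qed.

Lemma last_nth {V : Type} (r : list V) x : r <> [] -> last r x = nth (length r - 1) r x.
Proof.
  induction r as [|a r IH]; intros H; [congruence|].
  destruct r as [|b r]; [reflexivity|].
  change (last (a :: b :: r) x) with (last (b :: r) x).
  rewrite IH by congruence. simpl. rewrite Nat.sub_0_r. reflexivity.
Qed.

Lemma exists_argmax (g : nat -> nat) L :
  1 <= L -> exists k, k < L /\ forall k', k' < L -> g k' <= g k.
Proof.
  induction L as [|L IH]; intros HL; [lia|]. destruct (Nat.eq_dec L 0) as [->|NL].
  - exists 0. split; [lia|]. intros k' Hk'. replace k' with 0 by lia. lia.
  - destruct IH as [k [Hk Hmax]]; [lia|].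
    destruct (Nat.le_ge_cases (g L) (g k)).
    + exists k. split; [lia|]. intros k' Hk'.
      destruct (Nat.eq_dec k' L); [subst; auto|apply Hmax; lia].
    + exists L. split; [lia|]. intros k' Hk'.
      destruct (Nat.eq_dec k' L); [subst; auto|specialize (Hmax k'); lia].
Qed.

Definition ancestor {V : Type} (par : V -> V) (w x : V) : Prop :=
  exists k, Nat.iter k par x = w.

Definition child_of {V : Type} (Vs : V -> Prop) (root : V) (par : V -> V) (u v : V) : Prop :=
  Vs u /\ u <> root /\ v = par u.

Definition cut {V : Type} (par : V -> V) (F : V -> V -> Prop) (w : V) : Prop :=
  F w (par w) \/ F (par w) w.

(* The edge from [u] to its parent is then the only edge whose removal
   separates {A, B} from {C, D} (see [separates_sole_cut]). *)
Definition sole_cut {V : Type} (par : V -> V) (u A B C D : V) : Prop :=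
  ancestor par u A /\ ancestor par u B /\
  (forall w, ancestor par w A -> ancestor par w B -> ancestor par w u) /\
  ~ ancestor par u C /\ ~ ancestor par u D /\
  (forall w, ancestor par w C -> ancestor par w D -> ancestor par w (par u)) /\
  (ancestor par (par u) C \/ ancestor par (par u) D).

Section Ancestry.

Context {V : Type} {par : V -> V}.

Lemma ancestor_refl x : ancestor par x x.
Proof. exists 0; reflexivity. Qed.

Lemma ancestor_unfold w x : ancestor par w x <-> w = x \/ ancestor par w (par x).
Proof.
  split.
  - intros [[|k] H]; [left; symmetry; exact H|right].
    exists k. rewrite <- Nat.iter_succ_r. exact H.
  - intros [->|[k H]]; [apply ancestor_refl|].
    exists (S k). rewrite Nat.iter_succ_r. exact H.
Qed.

Lemma ancestor_par x : ancestor par (par x) x.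
Proof. apply ancestor_unfold. right. apply ancestor_refl. Qed.

Lemma ancestor_trans a b c : ancestor par a b -> ancestor par b c -> ancestor par a c.
Proof.
  intros [k1 H1] [k2 H2]. exists (k1 + k2). rewrite Nat.iter_add, H2. exact H1.
Qed.

Lemma ancestor_total w u x : ancestor par w x -> ancestor par u x ->
  ancestor par w u \/ ancestor par u w.
Proof.
  intros [k1 H1] [k2 H2]. destruct (Nat.le_ge_cases k1 k2).
  - right. exists (k2 - k1). rewrite <- H1, <- H2, <- Nat.iter_add. f_equal. lia.
  - left. exists (k1 - k2). rewrite <- H1, <- H2, <- Nat.iter_add. f_equal. lia.
Qed.

Lemma lca_of_split_child u u1 a b : par u1 = u -> ancestor par u1 a -> ~ ancestor par u1 b ->
  forall w, ancestor par w a -> ancestor par w b -> ancestor par w u.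
Proof.
  intros P A1 B1 w Wa Wb. destruct (ancestor_total w u1 a Wa A1) as [X|X].
  - apply ancestor_unfold in X as [->|X]; [contradiction|rewrite <- P; exact X].
  - exfalso; apply B1. eapply ancestor_trans; eauto.
Qed.

Lemma sole_cut_intro u u1 x p1 A B C D :
  par u1 = u -> ancestor par u1 A -> ~ ancestor par u1 B -> ancestor par u B ->
  ~ ancestor par u C -> ~ ancestor par u D ->
  par p1 = x -> ancestor par p1 C -> ~ ancestor par p1 D -> ancestor par x D ->
  ancestor par x (par u) -> ancestor par (par u) C \/ ancestor par (par u) D ->
  sole_cut par u A B C D.
Proof.
  intros P1 A1 B1 B2 C1 D1 P2 C2 D2 D3 Xu H. repeat split; auto.
  - eapply ancestor_trans; [|exact A1]. rewrite <- P1. apply ancestor_par.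
  - eapply lca_of_split_child; eauto.
  - intros w Wc Wd. eapply ancestor_trans; [|exact Xu]. eapply lca_of_split_child; eauto.
Qed.

Lemma sole_cut_swap u A B C D : sole_cut par u B A C D -> sole_cut par u A B C D.
Proof. unfold sole_cut. intuition. Qed.

End Ancestry.

(* [depth] is a ranking function: iterating [par] reaches [root]. *)
Record parent_tree {V : Type} (Vs : V -> Prop) (adj : V -> V -> Prop)
    (root : V) (par : V -> V) (depth : V -> nat) : Prop := {
  root_in : Vs root;
  par_root : par root = root;
  par_in : forall v, Vs v -> v <> root -> Vs (par v);
  depth_par : forall v, Vs v -> v <> root -> depth (par v) < depth v;
  adj_child : forall u v, adj u v <-> child_of Vs root par u v \/ child_of Vs root par v u
}.

Arguments root_in {V Vs adj root par depth}.
Arguments par_root {V Vs adj root par depth}.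
Arguments par_in {V Vs adj root par depth}.
Arguments depth_par {V Vs adj root par depth}.
Arguments adj_child {V Vs adj root par depth}.

Section ParentTree.

Context {V : Type} {Vs : V -> Prop} {adj : V -> V -> Prop}.
Context {root : V} {par : V -> V} {depth : V -> nat}.
Hypothesis PT : parent_tree Vs adj root par depth.

Local Notation anc := (ancestor par).
Local Notation conn F := (clos_refl_trans V (adj_minus adj F)).

Lemma adj_sym u v : adj u v -> adj v u.
Proof. rewrite !(adj_child PT). tauto. Qed.

Lemma adj_in u v : adj u v -> Vs u /\ Vs v.
Proof.
  rewrite (adj_child PT). intros [[Hu [Hr ->]]|[Hv [Hr ->]]];
    split; auto; apply (par_in PT); auto.
Qed.

Lemma adj_irrefl u : ~ adj u u.
Proof.
  rewrite (adj_child PT). intros [[Hu [Hr E]]|[Hu [Hr E]]];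
    pose proof (depth_par PT u Hu Hr); rewrite <- E in *; lia.
Qed.

Lemma adj_deeper_par u v : adj u v -> depth v <= depth u -> v = par u.
Proof.
  rewrite (adj_child PT). intros [[_ [_ E]]|[Hv [Hr ->]]] Hd; auto.
  pose proof (depth_par PT v Hv Hr). lia.
Qed.

Lemma ancestor_of_root w : anc w root -> w = root.
Proof.
  intros [k H]. rewrite <- H. clear H. induction k as [|k IH]; [reflexivity|].
  simpl. rewrite IH. apply (par_root PT).
Qed.

Lemma ancestor_depth w x : Vs x -> anc w x -> w = x \/ (Vs w /\ depth w < depth x).
Proof.
  intros Hx [k H]. revert x Hx H. induction k as [|k IH]; intros x Hx H; [left; symmetry; exact H|].
  rewrite Nat.iter_succ_r in H. destruct (classic (x = root)) as [->|Hr].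
  - left. apply ancestor_of_root. exists (S k). rewrite Nat.iter_succ_r. exact H.
  - pose proof (depth_par PT x Hx Hr).
    destruct (IH (par x) (par_in PT x Hx Hr) H) as [->|[Hw Hd]];
      right; split; auto; [apply (par_in PT); auto|lia].
Qed.

Lemma root_ancestor x : Vs x -> anc root x.
Proof.
  induction x as [x IH] using (well_founded_induction (well_founded_ltof V depth)).
  intros Hx. destruct (classic (x = root)) as [->|Hr]; [apply ancestor_refl|].
  apply ancestor_unfold. right.
  apply IH; [apply (depth_par PT)|apply (par_in PT)]; auto.
Qed.

Lemma ancestor_antisym w x : Vs x -> anc w x -> anc x w -> w = x.
Proof.
  intros Hx H1 H2. destruct (ancestor_depth w x Hx H1) as [E|[Hw D]]; auto.
  destruct (ancestor_depth x w Hw H2) as [E|[_ D']]; auto. lia.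
Qed.

Lemma conn_sym F x y : conn F x y -> conn F y x.
Proof.
  induction 1 as [x y [A [B C]]| |]; [|apply rt_refl|eapply rt_trans; eauto].
  apply rt_step. split; [apply adj_sym; auto|tauto].
Qed.

Lemma conn_cut_ancestor F w x y : conn F x y -> cut par F w -> (anc w x <-> anc w y).
Proof.
  intros H HF. induction H as [x y [A [B C]]| |]; [|tauto|tauto].
  apply (adj_child PT) in A as [[_ [_ ->]]|[_ [_ ->]]].
  - rewrite (ancestor_unfold w x). split; [|tauto].
    intros [->|Z]; auto. destruct HF; tauto.
  - rewrite (ancestor_unfold w y). split; [tauto|].
    intros [->|Z]; auto. destruct HF; tauto.
Qed.

Lemma conn_par F u : Vs u -> u <> root -> ~ cut par F u -> conn F u (par u).
Proof.
  intros Hu Hr Hc. apply rt_step. split.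
  - apply (adj_child PT). left. repeat split; auto.
  - unfold cut in Hc. tauto.
Qed.

Lemma conn_of_ancestor F x y : Vs x -> Vs y ->
  (forall w, Vs w -> w <> root -> cut par F w -> (anc w x <-> anc w y)) -> conn F x y.
Proof.
  remember (depth x + depth y) as N. revert x y HeqN.
  induction N as [N IH] using lt_wf_ind. intros x y HN Hx Hy HF.
  destruct (classic (anc x y)) as [A|A].
  - destruct (classic (x = y)) as [<-|E]; [apply rt_refl|].
    assert (Yr : y <> root) by (intros ->; apply E, ancestor_of_root, A).
    assert (NF : ~ cut par F y).
    { intros Z. apply E, ancestor_antisym; auto.
      apply (HF y Hy Yr Z), ancestor_refl. }
    pose proof (depth_par PT y Hy Yr).
    eapply rt_trans; [|apply conn_sym, conn_par; eauto].
    apply (IH (depth x + depth (par y))); [lia|reflexivity|exact Hx|apply (par_in PT); auto|].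
    intros w Hw Hwr Fw. rewrite (HF w Hw Hwr Fw), (ancestor_unfold w y).
    split; [|tauto]. intros [->|Z]; [contradiction|exact Z].
  - assert (Xr : x <> root) by (intros ->; apply A, root_ancestor, Hy).
    assert (NF : ~ cut par F x) by (intros Z; apply A, (HF x Hx Xr Z), ancestor_refl).
    pose proof (depth_par PT x Hx Xr).
    eapply rt_trans; [apply conn_par; eauto|].
    apply (IH (depth (par x) + depth y)); [lia|reflexivity|apply (par_in PT); auto|exact Hy|].
    intros w Hw Hwr Fw. rewrite <- (HF w Hw Hwr Fw), (ancestor_unfold w x).
    split; [tauto|]. intros [->|Z]; [contradiction|exact Z].
Qed.

Lemma parent_connected u v : Vs u -> Vs v -> clos_refl_trans V adj u v.
Proof.
  intros Hu Hv. assert (H : conn (fun _ _ => False) u v).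
  { apply conn_of_ancestor; auto. intros w _ _ [[]|[]]. }
  clear Hu Hv.
  induction H as [x y [A _]| |]; [apply rt_step, A|apply rt_refl|eapply rt_trans; eauto].
Qed.

(* On a cycle, the vertex of maximal depth would have its parent as both
   neighbours. *)
Lemma parent_acyclic : ~ has_cycle adj.
Proof.
  intros [x [r [ND [Lr [Ch La]]]]].
  set (c := x :: r) in *. set (L := length c). set (f := fun k => nth k c x).
  assert (Hs : forall k, S k < L -> adj (f k) (f (S k))) by (intros; apply chain_nth; auto).
  assert (Hl : adj (f (L - 1)) (f 0)).
  { unfold f, L, c. simpl length. replace (S (length r) - 1) with (S (length r - 1)) by lia.
    simpl nth. rewrite <- last_nth; auto. intros ->; simpl in Lr; lia. }
  destruct (exists_argmax (fun k => depth (f k)) L) as [k [Hk Hmax]]; [unfold L; simpl; lia|].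
  set (kp := if S k <? L then S k else 0).
  set (km := if k =? 0 then L - 1 else k - 1).
  assert (Hkp : kp < L) by (unfold kp; destruct (Nat.ltb_spec (S k) L); lia).
  assert (Hkm : km < L) by (unfold km; destruct (Nat.eqb_spec k 0); lia).
  assert (A1 : adj (f k) (f kp)).
  { unfold kp. destruct (Nat.ltb_spec (S k) L); [auto|].
    replace k with (L - 1) by lia. exact Hl. }
  assert (A2 : adj (f k) (f km)).
  { apply adj_sym. unfold km. destruct (Nat.eqb_spec k 0) as [->|Hk0]; [exact Hl|].
    replace k with (S (k - 1)) at 2 by lia. apply Hs. lia. }
  apply adj_deeper_par in A1; [|apply Hmax; auto].
  apply adj_deeper_par in A2; [|apply Hmax; auto].
  assert (E : nth kp c x = nth km c x) by (unfold f in *; congruence).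
  apply (NoDup_nth c x) in E; auto.
  unfold kp, km in E.
  destruct (Nat.ltb_spec (S k) L), (Nat.eqb_spec k 0); simpl in Lr; unfold L, c in *;
    simpl length in *; lia.
Qed.

Lemma parent_is_tree (l : list V) : (forall v, Vs v <-> In v l) -> is_tree Vs adj.
Proof.
  intros Hl. repeat split.
  - exists l. exact Hl.
  - exists root. apply (root_in PT).
  - apply (adj_in u v). assumption.
  - apply (adj_in u v). assumption.
  - apply adj_sym.
  - apply adj_irrefl.
  - apply parent_connected.
  - apply parent_acyclic.
Qed.

Lemma degree_root kids : NoDup kids -> (forall w, In w kids <-> child_of Vs root par w root) ->
  degree adj root (length kids).
Proof.
  intros N Hk. exists kids. split; [exact N|split; [|reflexivity]].
  intros w. rewrite (adj_child PT), Hk. unfold child_of. intuition congruence.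
Qed.

Lemma degree_nonroot v kids : Vs v -> v <> root -> NoDup kids ->
  (forall w, In w kids <-> child_of Vs root par w v) -> degree adj v (S (length kids)).
Proof.
  intros Hv Hr N Hk. exists (par v :: kids). split; [|split; [|reflexivity]].
  - constructor; auto. intros H. apply Hk in H as [Hp [Hpr E]].
    pose proof (depth_par PT v Hv Hr). pose proof (depth_par PT (par v) Hp Hpr).
    rewrite <- E in *. lia.
  - intros w. simpl. rewrite (adj_child PT), Hk. split.
    + intros [<-|H]; [left; repeat split; auto|right; exact H].
    + intros [H|H]; [|right; exact H]. destruct H as [_ [_ ->]]. left; reflexivity.
Qed.

Section Quartets.

Context {X : Type} (phi : X -> V).

Lemma displays_of_cut (a b c d : X) p : Vs p -> p <> root ->
  Vs (phi a) -> Vs (phi b) -> Vs (phi c) -> Vs (phi d) ->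
  (anc p (phi a) <-> anc p (phi b)) -> (anc p (phi c) <-> anc p (phi d)) ->
  ~ (anc p (phi a) <-> anc p (phi c)) -> displays adj phi ((a, b), (c, d)).
Proof.
  intros Hp Hr Ha Hb Hc Hd E1 E2 E3.
  exists (fun u v => u = p /\ v = par p). split.
  - intros u v [-> ->]. apply (adj_child PT). left. repeat split; auto.
  - assert (HF : forall w, Vs w -> w <> root -> cut par (fun u v => u = p /\ v = par p) w -> w = p).
    { intros w Hw Hwr [[A B]|[A B]]; auto. exfalso. subst p.
      pose proof (depth_par PT w Hw Hwr).
      pose proof (depth_par PT _ (par_in PT w Hw Hwr) Hr).
      rewrite <- B in *. lia. }
    repeat split.
    + apply conn_of_ancestor; auto. intros w Hw Hwr Fw. rewrite (HF w Hw Hwr Fw). auto.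
    + apply conn_of_ancestor; auto. intros w Hw Hwr Fw. rewrite (HF w Hw Hwr Fw). auto.
    + intro C. apply E3. eapply conn_cut_ancestor; eauto. left; auto.
Qed.

Lemma displays_of_subtree_ab (a b c d : X) p : Vs p -> p <> root ->
  Vs (phi a) -> Vs (phi b) -> Vs (phi c) -> Vs (phi d) ->
  anc p (phi a) -> anc p (phi b) -> ~ anc p (phi c) -> ~ anc p (phi d) ->
  displays adj phi ((a, b), (c, d)).
Proof. intros. apply (displays_of_cut a b c d p); auto; tauto. Qed.

Lemma displays_of_subtree_cd (a b c d : X) p : Vs p -> p <> root ->
  Vs (phi a) -> Vs (phi b) -> Vs (phi c) -> Vs (phi d) ->
  ~ anc p (phi a) -> ~ anc p (phi b) -> anc p (phi c) -> anc p (phi d) ->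
  displays adj phi ((a, b), (c, d)).
Proof. intros. apply (displays_of_cut a b c d p); auto; tauto. Qed.

Lemma separates_cut F (a b c d : X) :
  Vs (phi a) -> Vs (phi b) -> Vs (phi c) -> Vs (phi d) ->
  separates adj phi F ((a, b), (c, d)) ->
  exists w, cut par F w /\ (anc w (phi a) <-> anc w (phi b)) /\
    (anc w (phi c) <-> anc w (phi d)) /\ ~ (anc w (phi a) <-> anc w (phi c)).
Proof.
  intros Ha Hb Hc Hd [S1 [S2 S3]].
  destruct (classic (exists w, Vs w /\ w <> root /\ cut par F w /\
                        ~ (anc w (phi a) <-> anc w (phi c))))
    as [[w [Hw [Hwr [Fw N]]]]|N].
  - exists w. split; [exact Fw|].
    split; [|split; [|exact N]]; eapply conn_cut_ancestor; eauto.
  - exfalso. apply S3, conn_of_ancestor; auto. intros w Hw Hwr Fw.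
    apply NNPP. intros E. apply N. exists w. auto.
Qed.

Lemma sole_cut_unique u A B C D : sole_cut par u A B C D -> forall w,
  (anc w A <-> anc w B) -> (anc w C <-> anc w D) -> ~ (anc w A <-> anc w C) -> w = u.
Proof.
  intros [H1 [H2 [H3 [H4 [H5 [H6 H7]]]]]] w E1 E2 E3.
  destruct (classic (anc w A)) as [Y|Y].
  - assert (Wu : anc w u) by (apply H3; tauto).
    assert (NC : ~ anc w C) by tauto. assert (ND : ~ anc w D) by tauto.
    apply ancestor_unfold in Wu as [Wu|Wu]; auto. exfalso.
    destruct H7 as [Z|Z]; [apply NC|apply ND]; eapply ancestor_trans; eauto.
  - exfalso. apply Y. eapply ancestor_trans; [|exact H1].
    eapply ancestor_trans; [apply H6; tauto|apply ancestor_par].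
Qed.

Lemma separates_sole_cut F (a b c d : X) u :
  Vs (phi a) -> Vs (phi b) -> Vs (phi c) -> Vs (phi d) ->
  (sole_cut par u (phi a) (phi b) (phi c) (phi d) \/
   sole_cut par u (phi c) (phi d) (phi a) (phi b)) ->
  separates adj phi F ((a, b), (c, d)) -> cut par F u.
Proof.
  intros Ha Hb Hc Hd HD HS.
  destruct (separates_cut F a b c d Ha Hb Hc Hd HS) as [w [Fw [E1 [E2 E3]]]].
  replace u with w; auto. destruct HD as [HD|HD]; eapply sole_cut_unique; eauto.
  rewrite E1, E2. tauto.
Qed.

Lemma distinguished_by_of_cuts (Q : quartet X -> Prop) :
  (forall u, Vs u -> u <> root -> ~ is_leaf Vs adj u -> ~ is_leaf Vs adj (par u) ->
     exists q, Q q /\ forall F, edge_set adj F -> separates adj phi F q -> cut par F u) ->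
  distinguished_by Vs adj phi Q.
Proof.
  intros Hcut u v A Nu Nv. pose proof A as A'.
  apply (adj_child PT) in A' as [[Hu [Hr ->]]|[Hv [Hr ->]]].
  - destruct (Hcut u Hu Hr Nu Nv) as [q [Hq Hd]].
    exists q. split; [exact Hq|split; [exact A|exact Hd]].
  - destruct (Hcut v Hv Hr Nv Nu) as [q [Hq Hd]].
    exists q. split; [exact Hq|split; [exact A|]].
    intros F HE HS. specialize (Hd F HE HS). unfold cut in Hd. tauto.
Qed.

End Quartets.

Lemma sole_cut_intro_root u u1 A B C : Vs (par u) -> u <> root ->
  par u1 = u -> anc u1 A -> ~ anc u1 B -> anc u B -> ~ anc u C -> anc (par u) C ->
  sole_cut par u A B C root.
Proof.
  intros Hpu Hr P1 A1 B1 B2 C1 C2. repeat split; auto.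
  - eapply ancestor_trans; [|exact A1]. rewrite <- P1. apply ancestor_par.
  - eapply lca_of_split_child; eauto.
  - intro Z. apply ancestor_of_root in Z. auto.
  - intros w _ Z. apply ancestor_of_root in Z. subst. apply root_ancestor; auto.
Qed.

End ParentTree.

Fixpoint find_first (f : nat -> bool) (lo k : nat) : option nat :=
  match k with
  | 0 => None
  | S k => if f lo then Some lo else find_first f (S lo) k
  end.

Fixpoint find_last (f : nat -> bool) (k : nat) : option nat :=
  match k with
  | 0 => None
  | S k' => if f k then Some k else find_last f k'
  end.

Lemma find_first_spec f lo k :
  match find_first f lo k with
  | Some r => lo <= r < lo + k /\ f r = true /\ (forall x, lo <= x < r -> f x = false)
  | None => forall x, lo <= x < lo + k -> f x = false
  end.
Proof.
  revert lo; induction k as [|k IH]; intros lo; simpl; [intros; lia|].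
  destruct (f lo) eqn:E; [split; [lia|split; [exact E|intros; lia]]|].
  specialize (IH (S lo)). destruct (find_first f (S lo) k).
  - destruct IH as [H1 [H2 H3]]. split; [lia|split; [exact H2|]].
    intros x Hx. destruct (Nat.eq_dec x lo); [subst; exact E|apply H3; lia].
  - intros x Hx. destruct (Nat.eq_dec x lo); [subst; exact E|apply IH; lia].
Qed.

Lemma find_last_spec f k :
  match find_last f k with
  | Some r => 1 <= r <= k /\ f r = true /\ (forall x, r < x <= k -> f x = false)
  | None => forall x, 1 <= x <= k -> f x = false
  end.
Proof.
  induction k as [|k IH]; simpl; [intros; lia|].
  destruct (f (S k)) eqn:E; [split; [lia|split; [exact E|intros; lia]]|].
  destruct (find_last f k).
  - destruct IH as [H1 [H2 H3]]. split; [lia|split; [exact H2|]].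
    intros x Hx. destruct (Nat.eq_dec x (S k)); [subst; exact E|apply H3; lia].
  - intros x Hx. destruct (Nat.eq_dec x (S k)); [subst; exact E|apply IH; lia].
Qed.

Lemma find_first_Some f lo k r : find_first f lo k = Some r <->
  lo <= r < lo + k /\ f r = true /\ (forall x, lo <= x < r -> f x = false).
Proof.
  pose proof (find_first_spec f lo k) as Sp. destruct (find_first f lo k) as [r'|].
  - destruct Sp as [R1 [R2 R3]]. split; [intros [= <-]; auto|].
    intros [Q1 [Q2 Q3]]. f_equal. destruct (Nat.lt_trichotomy r' r) as [L|[L|L]]; auto.
    + rewrite Q3 in R2 by lia. discriminate.
    + rewrite R3 in Q2 by lia. discriminate.
  - split; [discriminate|]. intros [Q1 [Q2 _]]. rewrite Sp in Q2 by lia. discriminate.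
Qed.

Lemma find_last_Some f k r : find_last f k = Some r <->
  1 <= r <= k /\ f r = true /\ (forall x, r < x <= k -> f x = false).
Proof.
  pose proof (find_last_spec f k) as Sp. destruct (find_last f k) as [r'|].
  - destruct Sp as [R1 [R2 R3]]. split; [intros [= <-]; auto|].
    intros [Q1 [Q2 Q3]]. f_equal. destruct (Nat.lt_trichotomy r' r) as [L|[L|L]]; auto.
    + rewrite R3 in Q2 by lia. discriminate.
    + rewrite Q3 in R2 by lia. discriminate.
  - split; [discriminate|]. intros [Q1 [Q2 _]]. rewrite Sp in Q2 by lia. discriminate.
Qed.

Lemma find_first_None f lo k : find_first f lo k = None <-> forall x, lo <= x < lo + k -> f x = false.
Proof.
  pose proof (find_first_spec f lo k) as Sp. destruct (find_first f lo k) as [r|]; [|tauto].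
  split; [discriminate|]. intros H. destruct Sp as [R1 [R2 _]]. rewrite H in R2 by lia. discriminate.
Qed.

Lemma find_last_None f k : find_last f k = None <-> forall x, 1 <= x <= k -> f x = false.
Proof.
  pose proof (find_last_spec f k) as Sp. destruct (find_last f k) as [r|]; [|tauto].
  split; [discriminate|]. intros H. destruct Sp as [R1 [R2 _]]. rewrite H in R2 by lia. discriminate.
Qed.

Section Reduction.

Variables (n m : nat) (cl : nat -> nat -> lit).
Hypothesis Hm : 1 <= m.
Hypothesis Hwf : wf_instance n m cl.

Local Notation ind := (in_delta m cl).

Definition in_deltab (i j : nat) : bool :=
  (1 <=? j) && (j <=? m) &&
  ((fst (cl j 1) =? i) || (fst (cl j 2) =? i) || (fst (cl j 3) =? i)).

Lemma in_deltab_spec i j : in_deltab i j = true <-> ind i j.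
Proof.
  unfold in_deltab, in_delta. rewrite !andb_true_iff, !orb_true_iff, !Nat.leb_le, !Nat.eqb_eq.
  split.
  - intros [[H1 H2] [[H|H]|H]]; (split; [lia|]); eexists; split; try exact H; lia.
  - intros [H [p [Hp Hq]]]. split; [lia|].
    assert (Hp3 : p = 1 \/ p = 2 \/ p = 3) by lia.
    destruct Hp3 as [Hp3|[Hp3|Hp3]]; subst p; tauto.
Qed.

Lemma in_deltab_false i j : in_deltab i j = false <-> ~ ind i j.
Proof. rewrite <- in_deltab_spec. destruct (in_deltab i j); split; congruence. Qed.

Lemma in_delta_range i j : ind i j -> 1 <= j <= m.
Proof. intros [H _]; exact H. Qed.

Definition delta_min i := find_first (in_deltab i) 1 m.
Definition delta_max i := find_last (in_deltab i) m.
Definition delta_next i j := find_first (in_deltab i) (S j) (m - j).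
Definition delta_prev i j := find_last (in_deltab i) (j - 1).

Lemma delta_min_Some i j : delta_min i = Some j <-> delta_first m cl i j.
Proof.
  unfold delta_min, delta_first. rewrite find_first_Some, in_deltab_spec. split.
  - intros [R [D Hx]]. split; [exact D|]. intros x Dx. apply NNPP. intros Lx.
    pose proof (in_delta_range _ _ Dx). apply in_deltab_false in Dx; auto. apply Hx. lia.
  - intros [D Hx]. pose proof (in_delta_range _ _ D). split; [lia|split; [exact D|]].
    intros x Lx. apply in_deltab_false. intros Dx. specialize (Hx x Dx). lia.
Qed.

Lemma delta_max_Some i j : delta_max i = Some j <-> delta_last m cl i j.
Proof.
  unfold delta_max, delta_last. rewrite find_last_Some, in_deltab_spec. split.
  - intros [R [D Hx]]. split; [exact D|]. intros x Dx. apply NNPP. intros Lx.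
    pose proof (in_delta_range _ _ Dx). apply in_deltab_false in Dx; auto. apply Hx. lia.
  - intros [D Hx]. pose proof (in_delta_range _ _ D). split; [lia|split; [exact D|]].
    intros x Lx. apply in_deltab_false. intros Dx. specialize (Hx x Dx). lia.
Qed.

Lemma delta_next_Some i j j' : delta_next i j = Some j' <->
  j < j' /\ ind i j' /\ (forall x, ind i x -> j < x -> j' <= x).
Proof.
  unfold delta_next. rewrite find_first_Some, in_deltab_spec. split.
  - intros [R [D Hx]]. split; [lia|split; [exact D|]]. intros x Dx Lx. apply NNPP. intros Gx.
    pose proof (in_delta_range _ _ Dx). apply in_deltab_false in Dx; auto. apply Hx. lia.
  - intros [L [D Hx]]. pose proof (in_delta_range _ _ D). split; [lia|split; [exact D|]].
    intros x Lx. apply in_deltab_false. intros Dx. specialize (Hx x Dx). lia.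
Qed.

Lemma delta_prev_Some i j j0 : delta_prev i j = Some j0 <->
  j0 < j /\ ind i j0 /\ (forall x, ind i x -> x < j -> x <= j0).
Proof.
  unfold delta_prev. rewrite find_last_Some, in_deltab_spec. split.
  - intros [R [D Hx]]. split; [lia|split; [exact D|]]. intros x Dx Lx. apply NNPP. intros Gx.
    pose proof (in_delta_range _ _ Dx). apply in_deltab_false in Dx; auto. apply Hx. lia.
  - intros [L [D Hx]]. pose proof (in_delta_range _ _ D). split; [lia|split; [exact D|]].
    intros x Lx. apply in_deltab_false. intros Dx. specialize (Hx x Dx). lia.
Qed.

Lemma delta_next_None i j : delta_next i j = None <-> forall x, ind i x -> x <= j.
Proof.
  unfold delta_next. rewrite find_first_None. split.
  - intros H x Dx. pose proof (in_delta_range _ _ Dx). apply NNPP. intros Lx.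
    apply in_deltab_spec in Dx. rewrite H in Dx by lia. discriminate.
  - intros H x Lx. apply in_deltab_false. intros Dx. specialize (H x Dx). lia.
Qed.

Lemma delta_prev_None i j : delta_prev i j = None <-> forall x, ind i x -> j <= x.
Proof.
  unfold delta_prev. rewrite find_last_None. split.
  - intros H x Dx. pose proof (in_delta_range _ _ Dx). apply NNPP. intros Lx.
    apply in_deltab_spec in Dx. rewrite H in Dx by lia. discriminate.
  - intros H x Lx. apply in_deltab_false. intros Dx. specialize (H x Dx). lia.
Qed.

Lemma delta_nonempty i : 1 <= i <= n -> exists j, ind i j.
Proof.
  intros Hi. destruct Hwf as [_ [_ H3]]. destruct (H3 i Hi) as [j [p [A [B C]]]].
  exists j. split; [exact A|]. exists p; auto.
Qed.

Lemma delta_min_exists i : 1 <= i <= n -> exists j, delta_min i = Some j.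
Proof.
  intros Hi. destruct (delta_nonempty i Hi) as [j Hj].
  destruct (delta_min i) as [j'|] eqn:E; [eauto|].
  exfalso. pose proof (in_delta_range _ _ Hj). apply in_deltab_spec in Hj.
  unfold delta_min in E. rewrite find_first_None in E. rewrite E in Hj by lia. discriminate.
Qed.

Lemma delta_max_exists i : 1 <= i <= n -> exists j, delta_max i = Some j.
Proof.
  intros Hi. destruct (delta_nonempty i Hi) as [j Hj].
  destruct (delta_max i) as [j'|] eqn:E; [eauto|].
  exfalso. pose proof (in_delta_range _ _ Hj). apply in_deltab_spec in Hj.
  unfold delta_max in E. rewrite find_last_None in E. rewrite E in Hj by lia. discriminate.
Qed.

Lemma n_pos : 1 <= n.
Proof. destruct Hwf as [H1 _]. specialize (H1 1 1). lia. Qed.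

Local Notation Vs := (TI_verts n m cl).
Local Notation adj := (TI_adj n m cl).

(* T_I rooted at y_0. The [None] branches and the default [VY 0] are never
   taken on vertices of T_I. *)
Definition TI_par (v : vert) : vert :=
  match v with
  | VY 0 => VY 0
  | VY (S k) => VY k
  | VY' i => VY i
  | VA i => VY' i
  | VA' i => match delta_min i with Some j => VZ i j | None => VY' i end
  | VZ i j => match delta_next i j with Some j' => VZ i j' | None => VY' i end
  | VC i j => VZ i j
  | VU 0 => VU m
  | VU 1 => VY n
  | VU (S k) => VU k
  | VX j k => match k with 1 => VU j | 2 => VX j 1 | 3 => VX j 2 | 4 => VX j 2
              | 5 => VX j 4 | 6 => VX j 4 | _ => VY 0 end
  | VB j p => match p with 1 => VX j 6 | 2 => VX j 3 | _ => VX j 5 end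
  | VG j p => match p with 1 => VX j 6 | 2 => VX j 1 | _ => VX j 3 end
  | VL j => VX j 5
  end.

Definition TI_depth (v : vert) : nat :=
  match v with
  | VY k => k | VY' _ => n + 1 | VA _ => n + 2 | VZ _ j => n + 3 + (m - j)
  | VA' _ => n + m + 4 | VC _ _ => n + m + 4
  | VU 0 => n + m + 1 | VU k => n + k | VX _ k => n + m + 1 + k
  | VB _ _ => n + m + 8 | VG _ _ => n + m + 8 | VL _ => n + m + 8
  end.

Lemma TI_par_in_depth v : Vs v -> v <> VY 0 -> Vs (TI_par v) /\ TI_depth (TI_par v) < TI_depth v.
Proof.
  intros H Hne. destruct v; simpl in H |- *.
  - destruct k; [congruence|]. simpl; lia.
  - lia.
  - lia.
  - destruct (delta_min_exists i H) as [j E]. rewrite E.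
    apply delta_min_Some in E as [E _]. pose proof (in_delta_range _ _ E).
    simpl; split; [split; [lia|exact E]|lia].
  - destruct k as [|[|k]]; simpl; try lia. destruct m; lia.
  - destruct H as [H1 H2]. destruct k as [|[|[|[|[|[|[|k]]]]]]]; simpl; try lia. destruct j; lia.
  - destruct H as [H1 H2]. destruct p as [|[|[|p]]]; simpl; lia.
  - destruct H as [H1 H2]. destruct p as [|[|[|p]]]; simpl; lia.
  - lia.
  - destruct H as [H1 H2]. pose proof (in_delta_range _ _ H2). simpl; split; [split|]; auto; lia.
  - destruct H as [H1 H2]. destruct (delta_next i j) eqn:E.
    + apply delta_next_Some in E as [E1 [E2 _]]. pose proof (in_delta_range _ _ E2).
      pose proof (in_delta_range _ _ H2). simpl; split; [split|]; auto; lia.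
    + simpl; lia.
Qed.

Local Notation child := (child_of Vs (VY 0) TI_par).

Ltac child_tac := split; [simpl; lia | split; [discriminate | reflexivity]].

Lemma TI_edge_child u v : TI_edge n m cl u v -> child u v \/ child v u.
Proof.
  unfold TI_edge. intros [H|[H|[H|[H|[H|[H|[H|[H|[H|[H|H]]]]]]]]]].
  - destruct H as [i [Hi [-> ->]]]. right; child_tac.
  - destruct H as [i [Hi [-> ->]]]. left; child_tac.
  - destruct H as [i [j [Hi [Hj [-> ->]]]]]. left.
    split; [simpl; auto|split; [discriminate|reflexivity]].
  - destruct H as [k [Hk [-> ->]]]. right; child_tac.
  - destruct H as [-> ->]. right; child_tac.
  - destruct H as [k [Hk [Hk' [-> ->]]]]. right.
    split; [simpl; lia|split; [discriminate|]]. destruct k; [lia|reflexivity].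
  - destruct H as [-> ->]. right. split; [simpl; lia|split; [discriminate|]]. simpl.
    destruct m as [|[|m']]; [lia|reflexivity|reflexivity].
  - destruct H as [j [Hj H]].
    destruct H as [[-> ->]|[[-> ->]|[[-> ->]|[[-> ->]|[[-> ->]|[[-> ->]|[[-> ->]|
                  [[-> ->]|[[-> ->]|[[-> ->]|[[-> ->]|[[-> ->]|[-> ->]]]]]]]]]]]]];
      first [left; solve [child_tac] | right; solve [child_tac]].
  - destruct H as [i [j [Hi [Hj [-> ->]]]]]. left.
    pose proof (in_delta_range _ _ (proj1 Hj)).
    split; [simpl; lia|split; [discriminate|]]. simpl.
    apply delta_min_Some in Hj. rewrite Hj. reflexivity.
  - destruct H as [i [j [j' [Hi [[Hj [Hj' [Hlt Hmin]]] [-> ->]]]]]]. left.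
    split; [simpl; auto|split; [discriminate|]]. simpl.
    replace (delta_next i j) with (Some j'); [reflexivity|].
    symmetry. apply delta_next_Some. auto.
  - destruct H as [i [j [Hi [[Hj Hmax] [-> ->]]]]]. left.
    split; [simpl; auto|split; [discriminate|]]. simpl.
    replace (delta_next i j) with (@None nat); [reflexivity|].
    symmetry. apply delta_next_None. exact Hmax.
Qed.

Ltac edge_pick := first [ split; reflexivity | left; split; reflexivity | right; edge_pick ].

Lemma TI_child_edge u v : child u v -> TI_edge n m cl u v \/ TI_edge n m cl v u.
Proof.
  unfold child_of, TI_edge. intros [H [Hne ->]]. destruct u; simpl in H |- *.
  - destruct k; [congruence|]. right. do 3 right; left. exists k; repeat split; lia.
  - right. left. exists i; repeat split; lia.
  - left. right; left. exists i; repeat split; lia.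
  - destruct (delta_min_exists i H) as [j E]. rewrite E. left. do 8 right; left.
    exists i, j. split; [exact H|split; [apply delta_min_Some, E|auto]].
  - destruct k as [|[|k]].
    + right. do 6 right; left. auto.
    + right. do 4 right; left. auto.
    + right. do 5 right; left. exists (S k). repeat split; lia.
  - destruct H as [H1 H2]. right. do 7 right; left. exists j. split; [lia|].
    destruct k as [|[|[|[|[|[|[|k]]]]]]]; try lia; simpl; edge_pick.
  - destruct H as [H1 H2]. left. do 7 right; left. exists j. split; [lia|].
    destruct p as [|[|[|[|p]]]]; try lia; simpl; edge_pick.
  - destruct H as [H1 H2]. left. do 7 right; left. exists j. split; [lia|].
    destruct p as [|[|[|[|p]]]]; try lia; simpl; edge_pick.
  - left. do 7 right; left. exists j. split; [lia|]. edge_pick.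
  - left. do 2 right; left. exists i, j. tauto.
  - destruct H as [H1 H2]. left. destruct (delta_next i j) as [j'|] eqn:E.
    + do 9 right; left. apply delta_next_Some in E as [E1 [E2 E3]].
      exists i, j, j'. split; [exact H1|split; [|split; reflexivity]].
      split; [exact H2|split; [exact E2|split; [exact E1|exact E3]]].
    + do 10 right. pose proof (proj1 (delta_next_None i j) E) as Hmax. exists i, j.
      split; [exact H1|split; [split; [exact H2|exact Hmax]|split; reflexivity]].
Qed.

Lemma TI_parent_tree : parent_tree Vs adj (VY 0) TI_par TI_depth.
Proof.
  split.
  - simpl. lia.
  - reflexivity.
  - intros v Hv Hr. apply TI_par_in_depth; auto.
  - intros v Hv Hr. apply TI_par_in_depth; auto.
  - intros u v. unfold TI_adj. split.
    + intros [H|H]; apply TI_edge_child in H; tauto.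
    + intros [H|H]; apply TI_child_edge in H; tauto.
Qed.

Definition TI_vertex_list : list vert :=
  map VY (seq 0 (S n)) ++ map VY' (seq 1 n) ++ map VA (seq 1 n) ++ map VA' (seq 1 n) ++
  map VU (seq 0 (S m)) ++
  flat_map (fun j => map (VX j) (seq 1 6) ++ map (VB j) (seq 1 3) ++ map (VG j) (seq 1 3) ++ [VL j])
    (seq 1 m) ++
  flat_map (fun i => flat_map (fun j => if in_deltab i j then [VC i j; VZ i j] else []) (seq 1 m))
    (seq 1 n).

Tactic Notation "in_app" int_or_var(k) := do k (apply in_app_iff; right); apply in_app_iff; left.

Lemma TI_vertex_list_spec v : Vs v <-> In v TI_vertex_list.
Proof.
  unfold TI_vertex_list. split.
  - destruct v; intros H; simpl in H.
    + in_app 0. apply in_map, in_seq; lia.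
    + in_app 1. apply in_map, in_seq; lia.
    + in_app 2. apply in_map, in_seq; lia.
    + in_app 3. apply in_map, in_seq; lia.
    + in_app 4. apply in_map, in_seq; lia.
    + in_app 5. apply in_flat_map. exists j. split; [apply in_seq; lia|].
      in_app 0. apply in_map, in_seq; lia.
    + in_app 5. apply in_flat_map. exists j. split; [apply in_seq; lia|].
      in_app 1. apply in_map, in_seq; lia.
    + in_app 5. apply in_flat_map. exists j. split; [apply in_seq; lia|].
      in_app 2. apply in_map, in_seq; lia.
    + in_app 5. apply in_flat_map. exists j. split; [apply in_seq; lia|].
      do 3 (apply in_app_iff; right). left; reflexivity.
    + do 6 (apply in_app_iff; right). destruct H as [H1 H2]. pose proof (in_delta_range _ _ H2).
      apply in_flat_map. exists i. split; [apply in_seq; lia|].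
      apply in_flat_map. exists j. split; [apply in_seq; lia|].
      apply in_deltab_spec in H2. rewrite H2. left; reflexivity.
    + do 6 (apply in_app_iff; right). destruct H as [H1 H2]. pose proof (in_delta_range _ _ H2).
      apply in_flat_map. exists i. split; [apply in_seq; lia|].
      apply in_flat_map. exists j. split; [apply in_seq; lia|].
      apply in_deltab_spec in H2. rewrite H2. right; left; reflexivity.
  - intros H.
    repeat match goal with
    | H : In _ (_ ++ _) |- _ => apply in_app_iff in H; destruct H as [H|H]
    | H : In _ (map _ _) |- _ => apply in_map_iff in H; destruct H as [? [? H]]
    | H : In _ (flat_map _ _) |- _ => apply in_flat_map in H; destruct H as [? [? H]]
    | H : In _ (seq _ _) |- _ => apply in_seq in H
    | H : In _ (if ?b then _ else _) |- _ =>
        let E := fresh in destruct b eqn:E; [apply in_deltab_spec in E|]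
    | H : In _ [] |- _ => destruct H
    | H : In _ (_ :: _) |- _ => destruct H as [H|H]
    end; subst; simpl; try lia; split; auto; lia.
Qed.

Definition TI_kids (v : vert) : list vert :=
  match v with
  | VY k => (if k <? n then [VY (S k)] else [VU 1]) ++ (if 1 <=? k then [VY' k] else [])
  | VY' i => [VA i; match delta_max i with Some j => VZ i j | None => VA' i end]
  | VZ i j => [VC i j; match delta_prev i j with Some j0 => VZ i j0 | None => VA' i end]
  | VU k => match k with 0 => [] | S _ => [if k <? m then VU (S k) else VU 0; VX k 1] end
  | VX j k => match k with 1 => [VX j 2; VG j 2] | 2 => [VX j 3; VX j 4] | 3 => [VB j 2; VG j 3]
              | 4 => [VX j 5; VX j 6] | 5 => [VB j 3; VL j] | 6 => [VB j 1; VG j 1] | _ => [] end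
  | _ => []
  end.

Lemma TI_kids_sound v w : Vs v -> In w (TI_kids v) -> child w v.
Proof.
  pose proof n_pos as Hn. unfold child_of. intros Hv H.
  destruct v; simpl in Hv, H; try contradiction.
  - destruct (Nat.ltb_spec k n), k as [|k]; simpl in H;
      repeat (destruct H as [<-|H]; [split; [simpl; lia|split; [discriminate|]]|]);
      try contradiction; simpl; f_equal; lia.
  - destruct H as [<-|[<-|[]]]; [split; [simpl; lia|split; [discriminate|reflexivity]]|].
    destruct (delta_max_exists i Hv) as [j E]. rewrite E.
    apply delta_max_Some in E as [E1 E2].
    split; [simpl; auto|split; [discriminate|]]. simpl.
    replace (delta_next i j) with (@None nat); [reflexivity|].
    symmetry. apply delta_next_None. exact E2.
  - destruct k as [|k]; [contradiction|]. destruct H as [<-|[<-|[]]].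
    + destruct (Nat.ltb_spec (S k) m); (split; [simpl; lia|split; [discriminate|]]);
        simpl; [reflexivity|]. replace m with (S k) by lia. reflexivity.
    + split; [simpl; lia|split; [discriminate|reflexivity]].
  - destruct Hv as [H1 H2].
    destruct k as [|[|[|[|[|[|[|k]]]]]]]; simpl in H; try contradiction;
      repeat destruct H as [<-|H]; try contradiction;
      (split; [simpl; lia|split; [discriminate|reflexivity]]).
  - destruct Hv as [H1 H2]. pose proof (in_delta_range _ _ H2).
    destruct H as [<-|[<-|[]]]; [split; [simpl; auto|split; [discriminate|reflexivity]]|].
    destruct (delta_prev i j) as [j0|] eqn:E.
    + apply delta_prev_Some in E as [E1 [E2 E3]].
      split; [simpl; auto|split; [discriminate|]]. simpl.
      replace (delta_next i j0) with (Some j); [reflexivity|].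
      symmetry. apply delta_next_Some. split; [exact E1|split; [exact H2|]].
      intros x Dx Lx. destruct (Nat.lt_ge_cases x j); [specialize (E3 x Dx); lia|lia].
    + rewrite delta_prev_None in E.
      split; [simpl; lia|split; [discriminate|]]. simpl.
      replace (delta_min i) with (Some j); [reflexivity|].
      symmetry. apply delta_min_Some. split; auto.
Qed.

Lemma TI_kids_complete v w : child w v -> In w (TI_kids v).
Proof.
  pose proof n_pos as Hn. unfold child_of. intros [Hw [Hne ->]]. destruct w; simpl in Hw.
  - destruct k; [congruence|]. simpl. destruct (Nat.ltb_spec k n); [left; reflexivity|lia].
  - simpl. apply in_app_iff. right. destruct i; [lia|]. left; reflexivity.
  - simpl; auto.
  - simpl. destruct (delta_min_exists i Hw) as [j E]. rewrite E. simpl.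
    apply delta_min_Some in E as [E1 E2].
    replace (delta_prev i j) with (@None nat); [right; left; reflexivity|].
    symmetry. apply delta_prev_None. exact E2.
  - destruct k as [|[|k]]; simpl.
    + destruct m as [|m']; [lia|]. rewrite Nat.ltb_irrefl. left; reflexivity.
    + destruct (Nat.ltb_spec n n); [lia|]. apply in_app_iff; left; left; reflexivity.
    + destruct (Nat.ltb_spec (S k) m); [left; reflexivity|lia].
  - destruct Hw as [H1 H2].
    destruct k as [|[|[|[|[|[|[|k]]]]]]]; try lia; simpl; auto.
    destruct j; [lia|]. right; left; reflexivity.
  - destruct Hw as [H1 H2]. destruct p as [|[|[|[|p]]]]; try lia; simpl; auto.
  - destruct Hw as [H1 H2]. destruct p as [|[|[|[|p]]]]; try lia; simpl; auto.
  - simpl; auto.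
  - simpl; auto.
  - destruct Hw as [H1 H2]. simpl. destruct (delta_next i j) as [j'|] eqn:E.
    + apply delta_next_Some in E as [E1 [E2 E3]]. simpl.
      replace (delta_prev i j') with (Some j); [right; left; reflexivity|].
      symmetry. apply delta_prev_Some. split; [exact E1|split; [exact H2|]].
      intros x Dx Lx. destruct (Nat.le_gt_cases x j); [lia|specialize (E3 x Dx); lia].
    + simpl. replace (delta_max i) with (Some j); [right; left; reflexivity|].
      symmetry. apply delta_max_Some. split; [exact H2|]. apply delta_next_None, E.
Qed.

Lemma TI_kids_NoDup v : NoDup (TI_kids v).
Proof.
  destruct v; cbv beta iota delta [TI_kids].
  - destruct (k <? n), (1 <=? k); simpl; repeat constructor; simpl; intuition congruence.
  - repeat constructor; simpl; [|tauto]. intros [H|[]]. destruct (delta_max i); congruence.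
  - constructor.
  - constructor.
  - destruct k; [constructor|]. repeat constructor; simpl; [|tauto].
    intros [H|[]]. destruct (S k <? m); congruence.
  - destruct k as [|[|[|[|[|[|[|k]]]]]]]; repeat constructor; simpl; intuition congruence.
  - constructor.
  - constructor.
  - constructor.
  - constructor.
  - repeat constructor; simpl; [|tauto]. intros [H|[]]. destruct (delta_prev i j); congruence.
Qed.

Definition is_leaf_vertex (v : vert) : bool :=
  match v with
  | VY 0 | VA _ | VA' _ | VC _ _ | VU 0 | VB _ _ | VG _ _ | VL _ => true
  | _ => false
  end.

Lemma TI_degree v : Vs v -> degree adj v (if is_leaf_vertex v then 1 else 3).
Proof.
  intros Hv.
  assert (Hk : forall w, In w (TI_kids v) <-> child w v).
  { intros w. split; [apply TI_kids_sound; auto|apply TI_kids_complete]. }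
  pose proof n_pos as Hn. destruct (classic (v = VY 0)) as [->|Hr].
  - replace 1 with (length (TI_kids (VY 0))).
    + apply (degree_root TI_parent_tree); [apply TI_kids_NoDup|exact Hk].
    + simpl. destruct (Nat.ltb_spec 0 n); [reflexivity|lia].
  - replace (if is_leaf_vertex v then 1 else 3) with (S (length (TI_kids v))).
    + apply (degree_nonroot TI_parent_tree); auto. apply TI_kids_NoDup.
    + destruct v; simpl in Hv |- *; try reflexivity.
      * destruct k as [|k]; [congruence|]. destruct (S k <? n); reflexivity.
      * destruct k; reflexivity.
      * destruct Hv as [_ Hk6]. destruct k as [|[|[|[|[|[|[|k]]]]]]]; try lia; reflexivity.
Qed.

Lemma TI_leaf_iff v : is_leaf Vs adj v <-> Vs v /\ is_leaf_vertex v = true.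
Proof.
  split.
  - intros [Hv D]. split; auto. pose proof (degree_unique _ _ _ _ D (TI_degree v Hv)).
    destruct (is_leaf_vertex v); [reflexivity|discriminate].
  - intros [Hv E]. split; auto. pose proof (TI_degree v Hv) as D. rewrite E in D. exact D.
Qed.

Lemma TI_ternary : is_ternary Vs adj.
Proof.
  intros v [Hv NL]. pose proof (TI_degree v Hv) as D.
  destruct (is_leaf_vertex v) eqn:E; [|exact D].
  exfalso. apply NL, TI_leaf_iff. auto.
Qed.

Lemma TI_is_tree : is_tree Vs adj.
Proof. exact (parent_is_tree TI_parent_tree TI_vertex_list TI_vertex_list_spec). Qed.

Lemma pos_cl j p : 1 <= j <= m -> 1 <= p <= 3 -> pos cl j (fst (cl j p)) = p.
Proof.
  intros Hj Hp. destruct Hwf as [_ [W2 _]]. unfold pos.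
  destruct (Nat.eqb_spec (fst (cl j 1)) (fst (cl j p))) as [E1|E1]; [apply W2 in E1; auto; lia|].
  destruct (Nat.eqb_spec (fst (cl j 2)) (fst (cl j p))) as [E2|E2]; [apply W2 in E2; auto; lia|].
  assert (p <> 1) by (intros ->; auto). assert (p <> 2) by (intros ->; auto). lia.
Qed.

Lemma pos_range j i : 1 <= pos cl j i <= 3.
Proof. unfold pos. destruct (_ =? _); [lia|]. destruct (_ =? _); lia. Qed.

Lemma in_delta_pos i j : ind i j -> fst (cl j (pos cl j i)) = i.
Proof. intros [Hj [p [Hp <-]]]. rewrite pos_cl; auto. Qed.

Lemma rot_range t p : 1 <= p <= 3 -> 1 <= rot t p <= 3.
Proof.
  intros H. destruct t as [|[|[|t]]]; simpl; try lia; destruct p as [|[|[|[|p]]]]; simpl; lia.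
Qed.

Lemma rot_inj t p p' : 1 <= p <= 3 -> 1 <= p' <= 3 -> rot t p = rot t p' -> p = p'.
Proof.
  intros H H'. destruct t as [|[|[|t]]]; simpl; try lia;
    destruct p as [|[|[|[|p]]]]; try lia; destruct p' as [|[|[|[|p']]]]; simpl; lia.
Qed.

Lemma rot_surj t r : 1 <= r <= 3 -> exists p, 1 <= p <= 3 /\ rot t p = r.
Proof.
  intros H. destruct t as [|[|[|t]]];
    [| exists r; simpl; auto | |]; destruct r as [|[|[|[|r]]]]; try lia;
    solve [exists 1; simpl; auto | exists 2; simpl; auto | exists 3; simpl; auto].
Qed.

Variable sigma : nat -> bool.

Local Notation phi := (phi_sigma cl sigma).

Lemma lval_sign_inj i b b' : lval sigma (i, b) = lval sigma (i, b') -> b = b'.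
Proof. unfold lval; simpl. destruct b, b', (sigma i); simpl; congruence. Qed.

Lemma lval_negl l : lval sigma (negl l) = negb (lval sigma l).
Proof. destruct l as [i [|]]; unfold lval, negl; simpl; [reflexivity|now rewrite negb_involutive]. Qed.

Lemma tpos_range j : 1 <= tpos cl sigma j <= 3.
Proof. unfold tpos. destruct (lval _ _); [lia|]. destruct (lval _ _); lia. Qed.

Lemma phi_in x : XI n m cl x -> Vs (phi x).
Proof.
  destruct x; simpl; intros H.
  - destruct (lval sigma l); simpl; auto.
  - destruct H as [H1 H2]. pose proof (in_delta_range _ _ H2).
    destruct (lval sigma l); simpl; split; auto. apply rot_range, pos_range.
  - split; [lia|]. apply rot_range; lia.
  - auto.
  - lia.
  - lia.
Qed.

Lemma phi_leaf_vertex x : is_leaf_vertex (phi x) = true.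
Proof. destruct x; simpl; auto; destruct (lval sigma _); reflexivity. Qed.

Lemma phi_inj x y : XI n m cl x -> XI n m cl y -> phi x = phi y -> x = y.
Proof.
  intros Hx Hy E. destruct x, y; simpl in *;
  repeat match goal with
  | H : context [if lval sigma ?l then _ else _] |- _ =>
      let E := fresh "L" in destruct (lval sigma l) eqn:E
  end; try discriminate.
  - destruct l as [i b], l0 as [i' b']. injection E as ->. f_equal. f_equal.
    eapply lval_sign_inj. rewrite L, L0. reflexivity.
  - destruct l as [i b], l0 as [i' b']. injection E as ->. f_equal. f_equal.
    eapply lval_sign_inj. rewrite L, L0. reflexivity.
  - injection E as -> Hr. destruct Hx as [_ Hx], Hy as [_ Hy].
    apply rot_inj in Hr; try apply pos_range.
    assert (fst l = fst l0) by (rewrite <- (in_delta_pos _ _ Hx), <- (in_delta_pos _ _ Hy), Hr; auto).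
    destruct l as [i b], l0 as [i' b']; simpl in *. subst. f_equal. f_equal.
    eapply lval_sign_inj. rewrite L, L0. reflexivity.
  - destruct l as [i b], l0 as [i' b']; simpl in *. injection E as -> ->. f_equal. f_equal.
    eapply lval_sign_inj. rewrite L, L0. reflexivity.
  - injection E as -> Hr. f_equal. pose proof (tpos_range j0). apply rot_inj in Hr; lia.
  - injection E as ->. reflexivity.
  - reflexivity.
  - reflexivity.
Qed.

Lemma phi_onto_leaves v : Vs v -> is_leaf_vertex v = true -> exists x, XI n m cl x /\ phi x = v.
Proof.
  intros Hv Hl. destruct v; simpl in Hv, Hl; try discriminate.
  - destruct k; [|discriminate]. exists TDelta; simpl; auto.
  - exists (TAlpha (i, sigma i)). simpl. split; auto. unfold lval; simpl.
    destruct (sigma i); reflexivity.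
  - exists (TAlpha (i, negb (sigma i))). simpl. split; auto. unfold lval; simpl.
    destruct (sigma i); reflexivity.
  - destruct k; [|discriminate]. exists TMu; simpl; auto.
  - destruct Hv as [Hj Hp]. destruct (rot_surj (tpos cl sigma j) p Hp) as [q [Hq E]].
    destruct Hwf as [W1 _]. pose proof (W1 j q Hj Hq) as HC.
    assert (Hd : in_delta m cl (fst (cl j q)) j) by (split; [exact Hj|exists q; auto]).
    destruct (lval sigma (cl j q)) eqn:LC.
    + exists (TBeta j (cl j q)). simpl. split; [split; auto|].
      rewrite LC, pos_cl, E by auto. reflexivity.
    + exists (TBeta j (negl (cl j q))). simpl. split; [split; auto|].
      rewrite lval_negl, LC. simpl. rewrite pos_cl, E by auto. reflexivity.
  - destruct Hv as [Hj Hp]. destruct (rot_surj (tpos cl sigma j) p Hp) as [q [Hq E]].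
    exists (TGamma j q). simpl. split; [split; auto|]. rewrite E. reflexivity.
  - exists (TLambda j). simpl. auto.
  - destruct Hv as [Hi Hd]. exists (TBeta j (i, negb (sigma i))). simpl. split; [split; auto|].
    unfold lval; simpl. destruct (sigma i); reflexivity.
Qed.

Lemma TI_X_tree : is_X_tree Vs adj (XI n m cl) phi.
Proof.
  split; [exact TI_is_tree|split; [exact phi_in|]].
  intros v k Hv D Hk. pose proof (degree_unique _ _ _ _ D (TI_degree v Hv)).
  destruct (is_leaf_vertex v) eqn:E; [apply phi_onto_leaves; auto|lia].
Qed.

Lemma TI_phylogenetic : is_phylogenetic Vs adj (XI n m cl) phi.
Proof.
  split; [|split; [exact phi_inj|]].
  - intros x Hx. apply TI_leaf_iff. split; [apply phi_in; auto|apply phi_leaf_vertex].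
  - intros v Hv. apply TI_leaf_iff in Hv as [Hv E]. apply phi_onto_leaves; auto.
Qed.

Local Notation anc := (ancestor TI_par).

Lemma ancestor_VY k w : anc w (VY k) <-> exists k', w = VY k' /\ k' <= k.
Proof.
  induction k as [|k IH].
  - split.
    + intros H. apply (ancestor_of_root TI_parent_tree) in H. exists 0; auto.
    + intros [k' [-> Hk]]. replace k' with 0 by lia. apply ancestor_refl.
  - rewrite ancestor_unfold. cbn [TI_par]. rewrite IH. split.
    + intros [->|[k' [-> Hk]]]; [exists (S k)|exists k']; split; auto.
    + intros [k' [-> Hk]]. destruct (Nat.eq_dec k' (S k)) as [->|Hne]; [left; reflexivity|].
      right; exists k'; split; auto; lia.
Qed.

Lemma ancestor_VU k w : 1 <= k ->
  anc w (VU k) <-> (exists k', w = VU k' /\ 1 <= k' <= k) \/ anc w (VY n).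
Proof.
  intros Hk. induction k as [|k IH]; [lia|]. rewrite ancestor_unfold. destruct k as [|k].
  - cbn [TI_par]. split.
    + intros [->|H]; [left; exists 1; split; auto|right; auto].
    + intros [[k' [-> Hk']]|H]; [left; f_equal; lia|right; auto].
  - change (TI_par (VU (S (S k)))) with (VU (S k)). rewrite IH by lia. split.
    + intros [->|[[k' [-> Hk']]|H]]; [left; exists (S (S k))|left; exists k'|right]; auto.
      split; auto; lia.
    + intros [[k' [-> Hk']]|H]; [|right; right; auto].
      destruct (Nat.eq_dec k' (S (S k))) as [->|Hne]; [left; reflexivity|].
      right; left; exists k'; split; auto; lia.
Qed.

Lemma ancestor_VZ i j w : anc w (VZ i j) <->
  w = VZ i j \/ (exists j', w = VZ i j' /\ ind i j' /\ j < j') \/ anc w (VY' i).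
Proof.
  remember (m - j) as N. revert j HeqN. induction N as [N IH] using lt_wf_ind. intros j HN.
  rewrite ancestor_unfold. cbn [TI_par]. destruct (delta_next i j) as [j1|] eqn:E.
  - apply delta_next_Some in E as [E1 [E2 E3]]. pose proof (in_delta_range _ _ E2) as Rj1.
    rewrite (IH (m - j1)) by (auto; lia). split.
    + intros [->|[->|[[j' [-> [Hd Hlt]]]|H]]]; auto.
      * right; left. exists j1; auto.
      * right; left. exists j'; split; auto; split; auto; lia.
    + intros [->|[[j' [-> [Hd Hlt]]]|H]]; auto. right.
      specialize (E3 j' Hd Hlt). destruct (Nat.eq_dec j' j1) as [->|Hne]; [left; reflexivity|].
      right; left; exists j'; split; auto; split; auto; lia.
  - rewrite delta_next_None in E. split.
    + intros [->|H]; auto.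
    + intros [->|[[j' [-> [Hd Hlt]]]|H]]; auto. specialize (E j' Hd). lia.
Qed.

Lemma ancestor_VA' i w : 1 <= i <= n -> anc w (VA' i) <->
  w = VA' i \/ (exists j', w = VZ i j' /\ ind i j') \/ anc w (VY' i).
Proof.
  intros Hi. rewrite ancestor_unfold. cbn [TI_par].
  destruct (delta_min_exists i Hi) as [j E]. rewrite E.
  apply delta_min_Some in E as [E1 E2]. rewrite ancestor_VZ. split.
  - intros [->|[->|[[j' [-> [Hd Hlt]]]|H]]]; auto; right; left; eexists; eauto.
  - intros [->|[[j' [-> Hd]]|H]]; auto. right.
    specialize (E2 j' Hd). destruct (Nat.eq_dec j' j) as [->|Hne]; [left; reflexivity|].
    right; left; exists j'; split; auto; split; auto; lia.
Qed.

Lemma ancestor_VZ_VZ i j1 j2 : ind i j2 -> j1 <= j2 -> anc (VZ i j2) (VZ i j1).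
Proof.
  intros H1 L. destruct (Nat.eq_dec j1 j2) as [->|E]; [apply ancestor_refl|].
  apply ancestor_VZ. right; left. exists j2. split; auto. split; auto. lia.
Qed.

Lemma ancestor_VZ_VC i j1 j2 : ind i j2 -> j1 <= j2 -> anc (VZ i j2) (VC i j1).
Proof.
  intros. apply ancestor_unfold. right. apply ancestor_VZ_VZ; auto.
Qed.

Lemma ancestor_VZ_VA' i j : 1 <= i <= n -> ind i j -> anc (VZ i j) (VA' i).
Proof. intros. apply ancestor_VA'; auto. right; left. exists j; auto. Qed.

(* Vertices whose parent is a constructor term, so that one step of
   [ancestor_unfold] followed by [cbn] makes progress. *)
Ltac step_vertex v :=
  lazymatch v with
  | VY' _ => idtac | VA _ => idtac | VC _ _ => idtac | VU 0 => idtac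
  | VX _ _ => idtac | VB _ _ => idtac | VG _ _ => idtac | VL _ => idtac
  end.

Ltac anc_expand_in H :=
  repeat first
    [ rewrite ancestor_VY in H | rewrite ancestor_VU in H by lia
    | rewrite ancestor_VZ in H | rewrite ancestor_VA' in H by lia
    | match type of H with
      | context [ancestor TI_par ?w ?v] =>
          step_vertex v; rewrite (ancestor_unfold w v) in H; cbn [TI_par] in H
      end ].

Ltac anc_expand :=
  repeat first
    [ rewrite ancestor_VY | rewrite ancestor_VU by lia
    | rewrite ancestor_VZ | rewrite ancestor_VA' by lia
    | match goal with
      | |- context [ancestor TI_par ?w ?v] =>
          step_vertex v; rewrite (ancestor_unfold w v); cbn [TI_par]
      end ].

Ltac solve_side := first [ assumption | lia | (split; solve_side) ].

Ltac pick := first [ reflexivity | (left; pick) | (right; pick)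
                   | (eexists; split; [reflexivity | solve_side]) ].

Ltac refute H :=
  repeat match type of H with
  | _ \/ _ => destruct H as [H|H]
  | exists _, _ => let x := fresh "x" in destruct H as [x H]
  | _ /\ _ => let H' := fresh "H" in destruct H as [H H']
  end;
  first [ discriminate H | (injection H; intros; subst; lia) | (injection H; intros; subst; tauto) ].

Ltac not_ancestor := let H := fresh "NA" in intro H; anc_expand_in H; refute H.

Ltac is_ancestor :=
  first [ apply ancestor_refl | (apply ancestor_VZ_VA'; assumption)
        | (apply ancestor_VZ_VC; [assumption|lia]) | (anc_expand; pick) ].

Ltac neq_root := let H := fresh in intro H; inversion H; lia.

Ltac fin := first [ (simpl; solve_side) | neq_root | not_ancestor | is_ancestor ].

Ltac rot_cases :=
  repeat match goal with
  | |- context [rot ?t ?p] =>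
      let H := fresh "Hr" in
      assert (H : 1 <= rot t p <= 3) by (apply rot_range; first [apply pos_range | lia]);
      destruct (rot t p) as [|[|[|[|?]]]]; try lia
  end.

Ltac unfold_phi := simpl; unfold vpos, vneg, negl, lval; simpl.
Ltac sigma_cases i := let E := fresh "Si" in destruct (sigma i) eqn:E.

Ltac disp_ab p := apply (displays_of_subtree_ab TI_parent_tree phi _ _ _ _ p).
Ltac disp_cd p := apply (displays_of_subtree_cd TI_parent_tree phi _ _ _ _ p).

Lemma displays_A_B i : 1 <= i <= n -> displays adj phi (As i, Bs).
Proof.
  intros Hi. unfold As, Bs. disp_ab (VY' i); unfold_phi; sigma_cases i; rewrite ?Si; simpl; fin.
Qed.

Lemma displays_D_B j p : 1 <= j <= m -> 1 <= p <= 3 -> displays adj phi (Ds j p, Bs).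
Proof.
  intros Hj Hp. unfold Ds, Bs. disp_ab (VX j 1); simpl; rot_cases; fin.
Qed.

Lemma displays_S_S i j j' : 1 <= i <= n -> ind i j -> ind i j' ->
  displays adj phi (Ss j (vpos i), Ss j' (vneg i)).
Proof.
  intros Hi Hj Hj'. destruct (delta_max_exists i Hi) as [jl Ejl].
  apply delta_max_Some in Ejl as [Hl Hl'].
  pose proof (Hl' j Hj). pose proof (Hl' j' Hj').
  pose proof (in_delta_range _ _ Hj). pose proof (in_delta_range _ _ Hj').
  unfold Ss. sigma_cases i.
  - disp_cd (VZ i jl); unfold_phi; rewrite ?Si; simpl; rot_cases; fin.
  - disp_ab (VZ i j); unfold_phi; rewrite ?Si; simpl; rot_cases; fin.
Qed.

Lemma displays_S_K i j j' b : 1 <= i <= n -> ind i j -> ind i j' -> j < j' ->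
  displays adj phi (Ss j (i, b), Ks cl j' (i, negb b)).
Proof.
  intros Hi Hj Hj' Hlt. pose proof (in_delta_range _ _ Hj). pose proof (in_delta_range _ _ Hj').
  unfold Ss, Ks. destruct (lit_eqb _ _); destruct b; sigma_cases i.
  all: first
    [ solve [disp_cd (VX j' 1); unfold_phi; rewrite ?Si; simpl; rot_cases; fin]
    | solve [disp_ab (VZ i j); unfold_phi; rewrite ?Si; simpl; rot_cases; fin] ].
Qed.

Lemma displays_K_F i j j' b : 1 <= i <= n -> ind i j -> j < j' <= m ->
  displays adj phi (Ks cl j (i, b), Fs j').
Proof.
  intros Hi Hj Hlt. pose proof (in_delta_range _ _ Hj).
  unfold Fs, Ks. destruct (lit_eqb _ _); destruct b; sigma_cases i;
    disp_cd (VU j'); unfold_phi; rewrite ?Si; simpl; rot_cases; fin.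
Qed.

Lemma displays_H_S i' i j b' b : 1 <= i' -> i' < i <= n -> ind i j ->
  displays adj phi (Hs (i', b'), Ss j (i, b)).
Proof.
  intros Hi' Hi Hj. pose proof (in_delta_range _ _ Hj).
  unfold Hs, Ss. destruct b, b'; sigma_cases i; sigma_cases i';
    disp_cd (VY i); unfold_phi; rewrite ?Si, ?Si0; simpl; rot_cases; fin.
Qed.

Lemma displays_H_F i j b : 1 <= i <= n -> 1 <= j <= m -> displays adj phi (Hs (i, b), Fs j).
Proof.
  intros Hi Hj. unfold Hs, Fs. destruct b; sigma_cases i;
    disp_cd (VU 1); unfold_phi; rewrite ?Si; simpl; fin.
Qed.

Hypothesis Hsat : satisfying m cl sigma.

Lemma tpos_spec j p : 1 <= j <= m -> 1 <= p <= 3 ->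
  (lval sigma (cl j p) = true <-> p = tpos cl sigma j).
Proof.
  intros Hj Hp. destruct (Hsat j Hj) as [p0 [Hp0 [L0 U0]]].
  assert (T : tpos cl sigma j = p0).
  { unfold tpos. destruct (lval sigma (cl j 1)) eqn:E1; [apply U0; auto; lia|].
    destruct (lval sigma (cl j 2)) eqn:E2; [apply U0; auto; lia|].
    assert (p0 <> 1) by (intros ->; congruence). assert (p0 <> 2) by (intros ->; congruence). lia. }
  rewrite T. split; [intros H; apply U0; auto|intros ->; auto].
Qed.

Lemma lit_eqb_refl l : lit_eqb l l = true.
Proof. unfold lit_eqb. rewrite Nat.eqb_refl. destruct (snd l); reflexivity. Qed.

Lemma lit_eqb_negl l : lit_eqb (negl l) l = false.
Proof. unfold lit_eqb, negl. simpl. destruct (snd l); simpl; rewrite andb_false_r; reflexivity. Qed.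

Lemma negl_involutive l : negl (negl l) = l.
Proof. destruct l as [i b]; unfold negl; simpl. rewrite negb_involutive; reflexivity. Qed.

Lemma Ks_pos j p : 1 <= j <= m -> 1 <= p <= 3 ->
  Ks cl j (cl j p) = (TBeta j (negl (cl j p)), TLambda j).
Proof. intros. unfold Ks. rewrite pos_cl, lit_eqb_refl by auto. reflexivity. Qed.

Lemma Ks_neg j p : 1 <= j <= m -> 1 <= p <= 3 ->
  Ks cl j (negl (cl j p)) = (TBeta j (cl j p), TGamma j p).
Proof.
  intros. unfold Ks. change (fst (negl (cl j p))) with (fst (cl j p)).
  rewrite pos_cl, lit_eqb_negl, negl_involutive by auto. reflexivity.
Qed.

Lemma phi_beta_clause j p : 1 <= j <= m -> 1 <= p <= 3 ->
  phi (TBeta j (cl j p)) =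
  if p =? tpos cl sigma j then VB j (rot (tpos cl sigma j) p) else VC (fst (cl j p)) j.
Proof.
  intros Hj Hp. simpl. pose proof (tpos_spec j p Hj Hp) as T. rewrite pos_cl by auto.
  destruct (lval sigma (cl j p)) eqn:E, (Nat.eqb_spec p (tpos cl sigma j)); auto;
    exfalso; intuition congruence.
Qed.

Lemma phi_beta_negl_clause j p : 1 <= j <= m -> 1 <= p <= 3 ->
  phi (TBeta j (negl (cl j p))) =
  if p =? tpos cl sigma j then VC (fst (cl j p)) j else VB j (rot (tpos cl sigma j) p).
Proof.
  intros Hj Hp. simpl. pose proof (tpos_spec j p Hj Hp) as T. rewrite lval_negl.
  change (fst (negl (cl j p))) with (fst (cl j p)). rewrite pos_cl by auto.
  destruct (lval sigma (cl j p)) eqn:E, (Nat.eqb_spec p (tpos cl sigma j)); simpl; auto;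
    exfalso; intuition congruence.
Qed.

Lemma phi_alpha_clause j p : 1 <= j <= m -> 1 <= p <= 3 ->
  phi (TAlpha (cl j p)) = if p =? tpos cl sigma j then VA (fst (cl j p)) else VA' (fst (cl j p)).
Proof.
  intros Hj Hp. simpl. pose proof (tpos_spec j p Hj Hp) as T.
  destruct (lval sigma (cl j p)) eqn:E, (Nat.eqb_spec p (tpos cl sigma j)); auto;
    exfalso; intuition congruence.
Qed.

Lemma clause_vars j : 1 <= j <= m ->
  (forall p, 1 <= p <= 3 -> 1 <= fst (cl j p) <= n /\ ind (fst (cl j p)) j) /\
  fst (cl j 1) <> fst (cl j 2) /\ fst (cl j 1) <> fst (cl j 3) /\ fst (cl j 2) <> fst (cl j 3).
Proof.
  intros Hj. destruct Hwf as [W1 [W2 W3]]. split; [|split; [|split]].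
  - intros p Hp. split; [apply W1; auto|]. split; auto. exists p; auto.
  - intros E. apply W2 in E; auto; lia.
  - intros E. apply W2 in E; auto; lia.
  - intros E. apply W2 in E; auto; lia.
Qed.

Ltac clause_facts j Hj :=
  let F := fresh "CF" in
  destruct (clause_vars j Hj) as [F [? [? ?]]];
  destruct (F 1 ltac:(lia)) as [? ?]; destruct (F 2 ltac:(lia)) as [? ?];
  destruct (F 3 ltac:(lia)) as [? ?]; clear F.

Ltac tpos_cases j Ht :=
  pose proof (tpos_range j);
  assert (Ht : tpos cl sigma j = 1 \/ tpos cl sigma j = 2 \/ tpos cl sigma j = 3) by lia;
  destruct Ht as [Ht|[Ht|Ht]].

Ltac clause_fin Ht :=
  rewrite ?phi_beta_clause, ?phi_beta_negl_clause, ?phi_alpha_clause by (auto; lia);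
  simpl; rewrite ?Ht; simpl; fin.

Lemma displays_K_K j p : 1 <= j <= m -> 1 <= p <= 3 ->
  displays adj phi (Ks cl j (negl (cl j p)), Ks cl j (cl j p)).
Proof.
  intros Hj Hp. rewrite Ks_neg, Ks_pos by auto. clause_facts j Hj.
  tpos_cases j Ht; destruct p as [|[|[|[|p]]]]; try lia;
  first [ solve [disp_ab (VX j 6); clause_fin Ht]
        | solve [disp_cd (VX j 2); clause_fin Ht]
        | solve [disp_cd (VX j 5); clause_fin Ht] ].
Qed.

Lemma displays_K_L j p : 1 <= j <= m -> 1 <= p <= 3 ->
  displays adj phi (Ks cl j (negl (cl j p)), Ls cl j p).
Proof.
  intros Hj Hp. rewrite Ks_neg by auto. unfold Ls. clause_facts j Hj.
  tpos_cases j Ht; destruct p as [|[|[|[|p]]]]; try lia; cbn [next3];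
  first [ solve [disp_ab (VX j 6); clause_fin Ht]
        | solve [disp_cd (VX j 3); clause_fin Ht]
        | solve [disp_cd (VX j 4); clause_fin Ht] ].
Qed.

Lemma displays_S_K_clause j p : 1 <= j <= m -> 1 <= p <= 3 ->
  displays adj phi (Ss j (cl j (next3 p)), Ks cl j (cl j p)).
Proof.
  intros Hj Hp. rewrite Ks_pos by auto. unfold Ss. clause_facts j Hj.
  tpos_cases j Ht; destruct p as [|[|[|[|p]]]]; try lia; cbn [next3];
  first [ solve [disp_ab (VZ (fst (cl j 1)) j); clause_fin Ht]
        | solve [disp_ab (VZ (fst (cl j 2)) j); clause_fin Ht]
        | solve [disp_ab (VZ (fst (cl j 3)) j); clause_fin Ht]
        | solve [disp_cd (VX j 2); clause_fin Ht]
        | solve [disp_cd (VX j 5); clause_fin Ht] ].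
Qed.

Lemma displays_S_L j p : 1 <= j <= m -> 1 <= p <= 3 ->
  displays adj phi (Ss j (cl j (next3 (next3 p))), Ls cl j p).
Proof.
  intros Hj Hp. unfold Ss, Ls. clause_facts j Hj.
  tpos_cases j Ht; destruct p as [|[|[|[|p]]]]; try lia; cbn [next3];
  first [ solve [disp_ab (VZ (fst (cl j 1)) j); clause_fin Ht]
        | solve [disp_ab (VZ (fst (cl j 2)) j); clause_fin Ht]
        | solve [disp_ab (VZ (fst (cl j 3)) j); clause_fin Ht]
        | solve [disp_cd (VX j 3); clause_fin Ht]
        | solve [disp_cd (VX j 4); clause_fin Ht] ].
Qed.

Lemma TI_displays_QI : displays_set adj phi (QI n m cl).
Proof.
  intros q Hq. destruct Hq as [H|[H|[H|[H|[H|[H|[H|H]]]]]]].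
  - destruct H as [i [Hi ->]]. apply displays_A_B; auto.
  - destruct H as [j [p [Hj [Hp ->]]]]. apply displays_D_B; auto.
  - destruct H as [i [j [j' [Hi [Hj [Hj' ->]]]]]]. apply displays_S_S; auto.
  - destruct H as [i [j [j' [Hi [Hj [Hj' [Hlt [->| ->]]]]]]]].
    + apply (displays_S_K i j j' true); auto.
    + apply (displays_S_K i j j' false); auto.
  - destruct H as [i [j [j' [Hi [Hj [Hlt [->| ->]]]]]]].
    + apply (displays_K_F i j j' false); auto.
    + apply (displays_K_F i j j' true); auto.
  - destruct H as [i' [i [j [Hi' [Hi [Hj [->|[->|[->| ->]]]]]]]]].
    + apply (displays_H_S i' i j true true); auto.
    + apply (displays_H_S i' i j false true); auto.
    + apply (displays_H_S i' i j true false); auto.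
    + apply (displays_H_S i' i j false false); auto.
  - destruct H as [i [j [Hi [Hj [->| ->]]]]].
    + apply (displays_H_F i j false); auto.
    + apply (displays_H_F i j true); auto.
  - destruct H as [j [Hj H]]. cbv zeta in H.
    destruct H as [->|[->|[->|[->|[->|[->|[->|[->|[->|[->|[->| ->]]]]]]]]]]].
    + apply (displays_K_K j 1); auto; lia.
    + apply (displays_K_K j 2); auto; lia.
    + apply (displays_K_K j 3); auto; lia.
    + apply (displays_K_L j 1); auto; lia.
    + apply (displays_K_L j 2); auto; lia.
    + apply (displays_K_L j 3); auto; lia.
    + apply (displays_S_K_clause j 1); auto; lia.
    + apply (displays_S_K_clause j 2); auto; lia.
    + apply (displays_S_K_clause j 3); auto; lia.
    + apply (displays_S_L j 1); auto; lia.
    + apply (displays_S_L j 2); auto; lia.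
    + apply (displays_S_L j 3); auto; lia.
Qed.

Ltac sep_cut HS := eapply (separates_sole_cut TI_parent_tree phi); [ | | | | | exact HS].
Ltac fin_refl := first [ reflexivity | fin ].

Definition forced_cut (u : vert) : Prop :=
  exists q, QI n m cl q /\ forall F, edge_set adj F -> separates adj phi F q -> cut TI_par F u.

Lemma forced_cut_VY k : 2 <= k <= n -> forced_cut (VY k).
Proof.
  intros Hk. destruct k as [|[|k]]; try lia.
  destruct (delta_nonempty (S (S k))) as [j Hj]; [lia|]. pose proof (in_delta_range _ _ Hj).
  exists (Hs (vpos (S k)), Ss j (S (S k), sigma (S (S k)))). split.
  - do 5 right; left. exists (S k), (S (S k)), j. split; [lia|split; [lia|split; [exact Hj|]]].
    destruct (sigma (S (S k))); [left|right; right; left]; reflexivity.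
  - intros F HE HS. unfold Hs, Ss in HS. sep_cut HS; unfold_phi;
      sigma_cases (S (S k)); simpl; sigma_cases (S k); rot_cases; try solve [fin].
    all: right; apply (sole_cut_intro_root TI_parent_tree _ (VY' (S (S k)))); fin_refl.
Qed.

Lemma forced_cut_VY' i : 1 <= i <= n -> forced_cut (VY' i).
Proof.
  intros Hi. exists (As i, Bs). split; [left; exists i; auto|].
  intros F HE HS. unfold As, Bs in HS. sep_cut HS;
    unfold_phi; sigma_cases i; rewrite ?Si; simpl; try solve [fin].
  all: left; first
    [ solve [apply (sole_cut_intro_root TI_parent_tree _ (VA i)); cbn [TI_par]; fin_refl]
    | solve [apply sole_cut_swap, (sole_cut_intro_root TI_parent_tree _ (VA i)); cbn [TI_par]; fin_refl] ].
Qed.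

Lemma forced_cut_VZ i j : 1 <= i <= n -> ind i j -> forced_cut (VZ i j).
Proof.
  intros Hi Hj. pose proof (in_delta_range _ _ Hj). destruct (delta_next i j) as [j'|] eqn:E.
  - assert (Hpar : TI_par (VZ i j) = VZ i j') by (simpl; rewrite E; reflexivity).
    apply delta_next_Some in E as [Hlt [Hj' Hgap]]. pose proof (in_delta_range _ _ Hj').
    assert (Q : forall b, QI n m cl (Ss j (i, b), Ks cl j' (i, negb b))).
    { intros b. do 3 right; left. exists i, j, j'.
      do 4 (split; [assumption|]). destruct b; [left|right]; reflexivity. }
    exists (Ss j (i, negb (sigma i)), Ks cl j' (i, negb (negb (sigma i)))). split; [apply Q|].
    intros F HE HS. unfold Ss, Ks in HS. revert HS; destruct (lit_eqb _ _); intro HS;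
      sep_cut HS; unfold_phi; sigma_cases i; rewrite ?Si; simpl; rot_cases; try solve [fin];
      left; apply sole_cut_swap, (sole_cut_intro _ (VC i j) (VY i) (VY' i));
      rewrite ?Hpar; cbn [TI_par]; fin_refl.
  - assert (Hpar : TI_par (VZ i j) = VY' i) by (simpl; rewrite E; reflexivity).
    exists (Ss j (vpos i), Ss j (vneg i)). split; [do 2 right; left; exists i, j, j; auto|].
    intros F HE HS. unfold Ss in HS. sep_cut HS;
      unfold_phi; sigma_cases i; rewrite ?Si; simpl; rot_cases; try solve [fin].
    all: first [ solve [left; apply sole_cut_swap, (sole_cut_intro _ (VC i j) (VY i) (VY' i));
                        rewrite ?Hpar; cbn [TI_par]; fin_refl]
               | solve [right; apply sole_cut_swap, (sole_cut_intro _ (VC i j) (VY i) (VY' i));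
                        rewrite ?Hpar; cbn [TI_par]; fin_refl] ].
Qed.

Lemma forced_cut_VU1 : forced_cut (VU 1).
Proof.
  pose proof n_pos as Hn.
  exists (Hs (vpos n), Fs 1). split.
  - do 6 right; left. exists n, 1. split; [lia|split; [lia|right; reflexivity]].
  - intros F HE HS. unfold Hs, Fs in HS. sep_cut HS;
      unfold_phi; sigma_cases n; rewrite ?Si; simpl; try solve [fin].
    all: right; apply (sole_cut_intro_root TI_parent_tree _ (VX 1 1)); cbn [TI_par]; fin_refl.
Qed.

Lemma forced_cut_VU k : 2 <= k <= m -> forced_cut (VU k).
Proof.
  intros Hk. destruct k as [|[|k]]; try lia.
  assert (Hj : 1 <= S k <= m) by lia. clause_facts (S k) Hj.
  set (i := fst (cl (S k) 1)) in *.
  exists (Ks cl (S k) (i, sigma i), Fs (S (S k))). split.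
  - do 4 right; left. exists i, (S k), (S (S k)).
    split; [lia|split; [assumption|split; [lia|]]]. destruct (sigma i); [right|left]; reflexivity.
  - intros F HE HS. unfold Ks, Fs in HS. revert HS; destruct (lit_eqb _ _); intro HS;
      sep_cut HS; unfold_phi; sigma_cases i; rewrite ?Si; simpl; rot_cases; try solve [fin];
      right; apply (sole_cut_intro _ (VX (S (S k)) 1) (VY i) (VY' i)); cbn [TI_par]; fin_refl.
Qed.

Ltac QI_clause j := do 7 right; exists j; split; [lia|]; cbv zeta;
  repeat (first [left; reflexivity | right]); reflexivity.

Ltac cut_via_var u1 j := first
  [ solve [apply (sole_cut_intro _ u1 (VY (fst (cl j 1))) (VY' (fst (cl j 1)))); cbn [TI_par]; fin_refl]
  | solve [apply (sole_cut_intro _ u1 (VY (fst (cl j 2))) (VY' (fst (cl j 2)))); cbn [TI_par]; fin_refl]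
  | solve [apply (sole_cut_intro _ u1 (VY (fst (cl j 3))) (VY' (fst (cl j 3)))); cbn [TI_par]; fin_refl] ].

Ltac cut_clause j Ht q side u1 := exists q; split; [QI_clause j |
  intros F HE HS; rewrite ?Ks_neg, ?Ks_pos in HS by lia; unfold Ss, Ls in HS; cbn [next3] in HS;
  sep_cut HS; rewrite ?phi_beta_clause, ?phi_beta_negl_clause, ?phi_alpha_clause by lia;
  simpl; rewrite ?Ht; simpl; try solve [fin]; side; cut_via_var u1 j ].

Ltac cut_x1 j Ht p := exists (Ds j p, Bs); split;
  [ right; left; exists j, p; split; [lia|split; [lia|reflexivity]]
  | intros F HE HS; unfold Ds, Bs in HS; sep_cut HS;
    simpl; rewrite ?Ht; simpl; try solve [fin]; left;
    apply (sole_cut_intro_root TI_parent_tree _ (VG j 2)); cbn [TI_par]; fin_refl ].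
Ltac cut_x2 j Ht p := cut_clause j Ht (Ks cl j (negl (cl j p)), Ks cl j (cl j p)) ltac:(right) (VX j 3).
Ltac cut_x3 j Ht p := cut_clause j Ht (Ss j (cl j (next3 (next3 p))), Ls cl j p) ltac:(right) (VB j 2).
Ltac cut_x4 j Ht p := cut_clause j Ht (Ks cl j (negl (cl j p)), Ls cl j p) ltac:(right) (VX j 5).
Ltac cut_x5 j Ht p := cut_clause j Ht (Ss j (cl j (next3 p)), Ks cl j (cl j p)) ltac:(right) (VB j 3).
Ltac cut_x6 j Ht p := cut_clause j Ht (Ks cl j (negl (cl j p)), Ks cl j (cl j p)) ltac:(left) (VB j 1).

(* The quartet for x^j_k is built from the clause position [p] that [phi]
   sends to slot 2 (k = 1, 2, 3), 3 (k = 4, 5) or 1 (k = 6) of the gadget. *)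
Lemma forced_cut_VX j k : 1 <= j <= m -> 1 <= k <= 6 -> forced_cut (VX j k).
Proof.
  intros Hj Hk. clause_facts j Hj.
  destruct k as [|[|[|[|[|[|[|k]]]]]]]; try lia; tpos_cases j Ht.
  - cut_x1 j Ht 2.
  - cut_x1 j Ht 3.
  - cut_x1 j Ht 1.
  - cut_x2 j Ht 2.
  - cut_x2 j Ht 3.
  - cut_x2 j Ht 1.
  - cut_x3 j Ht 2.
  - cut_x3 j Ht 3.
  - cut_x3 j Ht 1.
  - cut_x4 j Ht 3.
  - cut_x4 j Ht 1.
  - cut_x4 j Ht 2.
  - cut_x5 j Ht 3.
  - cut_x5 j Ht 1.
  - cut_x5 j Ht 2.
  - cut_x6 j Ht 1.
  - cut_x6 j Ht 2.
  - cut_x6 j Ht 3.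
Qed.

Lemma forced_cut_internal u : Vs u -> u <> VY 0 ->
  is_leaf_vertex u = false -> is_leaf_vertex (TI_par u) = false -> forced_cut u.
Proof.
  intros Hu Hr L1 L2. destruct u; simpl in Hu, L1, L2; try discriminate.
  - destruct k as [|[|k]]; [congruence|discriminate|]. apply forced_cut_VY; lia.
  - apply forced_cut_VY'; auto.
  - destruct k as [|[|k]]; [discriminate|apply forced_cut_VU1|apply forced_cut_VU; lia].
  - destruct Hu. apply forced_cut_VX; auto.
  - destruct Hu. apply forced_cut_VZ; auto.
Qed.

Lemma TI_distinguished_by_QI : distinguished_by Vs adj phi (QI n m cl).
Proof.
  apply (distinguished_by_of_cuts TI_parent_tree). intros u Hu Hr Nu Np.
  apply forced_cut_internal; auto.
  - destruct (is_leaf_vertex u) eqn:E; auto. exfalso. apply Nu, TI_leaf_iff. auto.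
  - pose proof (par_in TI_parent_tree u Hu Hr).
    destruct (is_leaf_vertex (TI_par u)) eqn:E; auto. exfalso. apply Np, TI_leaf_iff. auto.
Qed.

End Reduction.

Theorem theorem9 (n m : nat) (cl : nat -> nat -> lit)
  (Hm : 1 <= m) (Hwf : wf_instance n m cl)
  (sigma : nat -> bool) (Hsat : satisfying m cl sigma) :
  is_X_tree (TI_verts n m cl) (TI_adj n m cl) (XI n m cl) (phi_sigma cl sigma) /\
  is_ternary (TI_verts n m cl) (TI_adj n m cl) /\
  is_phylogenetic (TI_verts n m cl) (TI_adj n m cl) (XI n m cl) (phi_sigma cl sigma) /\
  displays_set (TI_adj n m cl) (phi_sigma cl sigma) (QI n m cl) /\
  distinguished_by (TI_verts n m cl) (TI_adj n m cl) (phi_sigma cl sigma) (QI n m cl).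
Proof.
  split; [exact (TI_X_tree n m cl Hm Hwf sigma)|].
  split; [exact (TI_ternary n m cl Hm Hwf)|].
  split; [exact (TI_phylogenetic n m cl Hm Hwf sigma)|].
  split; [exact (TI_displays_QI n m cl Hm Hwf sigma Hsat)|].
  exact (TI_distinguished_by_QI n m cl Hm Hwf sigma Hsat).
Qed.
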